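(* Let $N_1,N_2$ be continuous fuzzy negations and $U_1,U_2$ disjunctive uninorms with neutral elements $e_1,e_2\in\,]0,1[$ respectively, such that $U_1(N_1(x),y)=U_2(N_2(x),y)$ for all $x,y\in[0,1]$. If $U_1$ has continuous underlying functions and $N_1\neq N_2$, then $U_2$ also has continuous underlying functions, and there exist idempotent points $a,d\in[0,1]$ of $U_1$ with $a<d$ such that the restriction of $U_1$ to $]a,d[^2$, and likewise the restriction of $U_2$ to $]a,d[^2$, is a linear transformation of some representable uninorm restricted to $]0,1[^2$. Moreover, $U_1$ coincides with $U_2$ on $([0,a]\cup[d,1])^2$.
   Context: A fuzzy negation is a non-increasing map $N:[0,1]\to[0,1]$ with $N(0)=1$, $N(1)=0$. A uninorm is a map $U:[0,1]^2\to[0,1]$ that is commutative, associative, non-decreasing in each variable, and has a neutral element $e\in[0,1]$; it is disjunctive if $U(1,0)=1$. For a uninorm with neutral element $e\in\,]0,1[$, the underlying t-norm is $T_U(x,y)=U(ex,ey)/e$ and the underlying t-conorm is $S_U(x,y)=(U(e+(1-e)x,e+(1-e)y)-e)/(1-e)$, $x,y\in[0,1]$; $U$ has continuous underlying functions if both are continuous. An idempotent point of $U$ is $z$ with $U(z,z)=z$. A uninorm $V$ with neutral element $e\in\,]0,1[$ is representable if there is a continuous strictly increasing $h:[0,1]\to[-\infty,+\infty]$ with $h(0)=-\infty$, $h(e)=0$, $h(1)=+\infty$ and $V(x,y)=h^{-1}(h(x)+h(y))$ for $(x,y)\notin\{(0,1),(1,0)\}$. The restriction of $U$ to $]a,d[^2$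 is a linear transformation of $V$ restricted to $]0,1[^2$ if $U(x,y)=a+(d-a)V\big(\frac{x-a}{d-a},\frac{y-a}{d-a}\big)$ for all $x,y\in\,]a,d[$. *)

From Stdlib Require Import Reals.
Open Scope R_scope.

Definition I01 (x : R) : Prop := 0 <= x <= 1.
Definition Iopen01 (x : R) : Prop := 0 < x < 1.

Definition fuzzy_negation (N : R -> R) : Prop :=
  (forall x, I01 x -> I01 (N x)) /\
  (forall x y, I01 x -> I01 y -> x <= y -> N y <= N x) /\
  N 0 = 1 /\ N 1 = 0.

Definition continuous_on01 (f : R -> R) : Prop :=
  forall x, I01 x -> forall eps, 0 < eps -> exists delta, 0 < delta /\
    forall y, I01 y -> Rabs (y - x) < delta -> Rabs (f y - f x) < eps.

Definition continuous_on01_2 (F : R -> R -> R) : Prop :=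
  forall x y, I01 x -> I01 y -> forall eps, 0 < eps -> exists delta, 0 < delta /\
    forall x' y', I01 x' -> I01 y' -> Rabs (x' - x) < delta -> Rabs (y' - y) < delta ->
      Rabs (F x' y' - F x y) < eps.

Definition uninorm (U : R -> R -> R) (e : R) : Prop :=
  I01 e /\
  (forall x y, I01 x -> I01 y -> I01 (U x y)) /\
  (forall x y, I01 x -> I01 y -> U x y = U y x) /\
  (forall x y z, I01 x -> I01 y -> I01 z -> U x (U y z) = U (U x y) z) /\
  (forall x1 x2 y, I01 x1 -> I01 x2 -> I01 y -> x1 <= x2 -> U x1 y <= U x2 y) /\
  (forall x, I01 x -> U e x = x).

Definition disjunctive (U : R -> R -> R) : Prop := U 1 0 = 1.

Definition underlying_tnorm (U : R -> R -> R) (e : R) : R -> R -> R :=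
  fun x y => U (e * x) (e * y) / e.

Definition underlying_tconorm (U : R -> R -> R) (e : R) : R -> R -> R :=
  fun x y => (U (e + (1 - e) * x) (e + (1 - e) * y) - e) / (1 - e).

Definition continuous_underlying (U : R -> R -> R) (e : R) : Prop :=
  continuous_on01_2 (underlying_tnorm U e) /\ continuous_on01_2 (underlying_tconorm U e).

Definition idempotent (U : R -> R -> R) (z : R) : Prop := U z z = z.

(* The generator h : [0,1] -> [-oo,+oo] is encoded by its (real-valued) restriction to
   ]0,1[, together with h(0) = -oo, h(1) = +oo and continuity into the extended reals,
   i.e. h x -> -oo as x -> 0+ and h x -> +oo as x -> 1-.  The formula
   V(x,y) = h^{-1}(h x + h y) for (x,y) not in {(0,1),(1,0)} is spelled out:
   on ]0,1[^2 it says h (V x y) = h x + h y with V x y in ]0,1[ (h is injective there);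
   if one argument is 0 and the other is < 1 the sum is -oo, so V = 0;
   if one argument is 1 and the other is > 0 the sum is +oo, so V = 1. *)
Definition representable (V : R -> R -> R) (e : R) : Prop :=
  0 < e < 1 /\ uninorm V e /\
  exists h : R -> R,
    (forall x y, Iopen01 x -> Iopen01 y -> x < y -> h x < h y) /\
    (forall x, Iopen01 x -> continuity_pt h x) /\
    h e = 0 /\
    (forall M, exists delta, 0 < delta /\ forall x, 0 < x < delta -> h x < M) /\
    (forall M, exists delta, 0 < delta /\ forall x, 1 - delta < x < 1 -> M < h x) /\
    (forall x y, Iopen01 x -> Iopen01 y -> Iopen01 (V x y) /\ h (V x y) = h x + h y) /\
    (forall y, 0 <= y < 1 -> V 0 y = 0 /\ V y 0 = 0) /\
    (forall y, 0 < y <= 1 -> V 1 y = 1 /\ V y 1 = 1).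

Definition linear_transform_on (U V : R -> R -> R) (a d : R) : Prop :=
  forall x y, a < x < d -> a < y < d ->
    U x y = a + (d - a) * V ((x - a) / (d - a)) ((y - a) / (d - a)).

Definition in_outer (a d x : R) : Prop := (0 <= x <= a) \/ (d <= x <= 1).

(* Since N1 and N2 are continuous they are onto [0,1], and substituting y := e2 and y := e1
   in U1(N1 x, y) = U2(N2 x, y) shows that e2 is invertible for U1, with inverse
   c = U2(e1, e1), and that U2(s, t) = U1(U1(s, c), t): U2 is U1 translated by c.
   As N1 <> N2 we have e2 <> e1, so U1 has an invertible element u > e1, with inverse v < e1.
   The powers of u increase to an idempotent d and those of v decrease to an idempotent a.
   On ]a,d[, every point can be translated by a power of u or v into the region where U1 is
   its continuous underlying t-norm or t-conorm; hence U1 is continuous, strictly increasing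
   and cancellative there, and has no idempotent. Iterated square roots of u give the dyadic
   powers u^(m/2^k), and H(x) = sup {m/2^k | u^(m/2^k) <= x} is a continuous additive
   generator of U1 on ]a,d[ with limits -oo at a and +oo at d; rescaled to ]0,1[ it makes
   U1 a representable uninorm there. The translate U2 has generator H + H(c), is continuous
   in the same way, and agrees with U1 where translation by u and v is trivial, i.e. outside ]a,d[. *)

From Stdlib Require Import Reals Lra Lia ZArith ClassicalEpsilon.
Open Scope R_scope.

(** * Relative continuity *)

Definition cont_in (f : R -> R) (A : R -> Prop) (x : R) :=
  forall eps, 0 < eps -> exists del, 0 < del /\
    forall y, A y -> Rabs (y - x) < del -> Rabs (f y - f x) < eps.

Definition cont2_in (F : R -> R -> R) (A B : R -> Prop) (x y : R) :=
  forall eps, 0 < eps -> exists del, 0 < del /\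
    forall x' y', A x' -> B y' -> Rabs (x' - x) < del -> Rabs (y' - y) < del ->
      Rabs (F x' y' - F x y) < eps.

Definition Icc (lo hi x : R) : Prop := lo <= x <= hi.

Lemma cont2_in_comp F A B A' B' f g x y :
  cont2_in F A B (f x) (g y) -> cont_in f A' x -> cont_in g B' y ->
  (forall z, A' z -> A (f z)) -> (forall z, B' z -> B (g z)) ->
  cont2_in (fun p q => F (f p) (g q)) A' B' x y.
Proof.
  intros HF Hf Hg HA HB eps Heps.
  destruct (HF eps Heps) as [d [Hd Hd']].
  destruct (Hf d Hd) as [d1 [Hd1 Hd1']].
  destruct (Hg d Hd) as [d2 [Hd2 Hd2']].
  exists (Rmin d1 d2); split; [apply Rmin_pos; auto|].
  intros x' y' Hx' Hy' Ex Ey.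
  apply Hd'; auto.
  - apply Hd1'; auto. eapply Rlt_le_trans; [exact Ex|apply Rmin_l].
  - apply Hd2'; auto. eapply Rlt_le_trans; [exact Ey|apply Rmin_r].
Qed.

Lemma cont_in_comp2 h C F A B x y :
  cont_in h C (F x y) -> cont2_in F A B x y -> (forall p q, A p -> B q -> C (F p q)) ->
  cont2_in (fun p q => h (F p q)) A B x y.
Proof.
  intros Hh HF HC eps Heps.
  destruct (Hh eps Heps) as [d [Hd Hd']].
  destruct (HF d Hd) as [d1 [Hd1 Hd1']].
  exists d1; split; [exact Hd1|].
  intros x' y' Hx' Hy' Ex Ey. apply Hd'; auto.
Qed.

Lemma cont2_in_local F A B x y r : 0 < r ->
  cont2_in F (fun z => A z /\ Rabs (z - x) < r) B x y -> cont2_in F A B x y.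
Proof.
  intros Hr H eps Heps. destruct (H eps Heps) as [d [Hd Hd']].
  exists (Rmin d r); split; [apply Rmin_pos; auto|].
  intros x' y' Hx' Hy' Ex Ey. apply Hd'.
  - split; auto. eapply Rlt_le_trans; [exact Ex|apply Rmin_r].
  - exact Hy'.
  - eapply Rlt_le_trans; [exact Ex|apply Rmin_l].
  - eapply Rlt_le_trans; [exact Ey|apply Rmin_l].
Qed.

Lemma cont2_in_ext F G A B x y : A x -> B y ->
  (forall p q, A p -> B q -> F p q = G p q) -> cont2_in F A B x y -> cont2_in G A B x y.
Proof.
  intros Hx Hy E H eps Heps. destruct (H eps Heps) as [d [Hd Hd']].
  exists d; split; auto. intros x' y' Hx' Hy' E1 E2.
  rewrite <- !E; auto.
Qed.

Lemma cont2_in_subset F A B A' B' x y :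
  (forall z, A' z -> A z) -> (forall z, B' z -> B z) -> cont2_in F A B x y -> cont2_in F A' B' x y.
Proof.
  intros HA HB H eps Heps. destruct (H eps Heps) as [d [Hd Hd']].
  exists d; split; auto.
Qed.

Lemma cont_in_subset f A A' x :
  (forall z, A' z -> A z) -> cont_in f A x -> cont_in f A' x.
Proof.
  intros HA H eps Heps. destruct (H eps Heps) as [d [Hd Hd']].
  exists d; split; auto.
Qed.

Lemma cont_in_comp f g A B x : cont_in f A (g x) -> cont_in g B x -> (forall z, B z -> A (g z)) ->
  cont_in (fun z => f (g z)) B x.
Proof.
  intros Hf Hg HB eps Heps. destruct (Hf eps Heps) as [d [Hd Hd']].
  destruct (Hg d Hd) as [d1 [Hd1 Hd1']].
  exists d1; split; auto.
Qed.

Lemma cont_in_id A x : cont_in (fun z => z) A x.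
Proof. intros eps Heps. exists eps. split; auto. Qed.

Lemma cont_in_affine p q A x : cont_in (fun z => p + q * z) A x.
Proof.
  intros eps Heps. exists (eps / (Rabs q + 1)).
  pose proof (Rabs_pos q). split; [apply Rdiv_lt_0_compat; lra|].
  intros y _ E.
  replace (p + q * y - (p + q * x)) with (q * (y - x)) by ring.
  rewrite Rabs_mult.
  pose proof (Rabs_pos (y - x)).
  apply Rle_lt_trans with ((Rabs q + 1) * Rabs (y - x)); [nra|].
  apply Rlt_le_trans with ((Rabs q + 1) * (eps / (Rabs q + 1))).
  - apply Rmult_lt_compat_l; lra.
  - right. field. lra.
Qed.

Lemma cont_in_plus_const f A x k : cont_in f A x -> cont_in (fun z => f z + k) A x.
Proof.
  intros H eps Heps. destruct (H eps Heps) as [del [Hd Hd']]. exists del. split; auto.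
  intros y Hy E. replace (f y + k - (f x + k)) with (f y - f x) by ring. auto.
Qed.

Lemma cont2_in_fst F A B x y : A x -> cont2_in F A B x y -> cont_in (F x) B y.
Proof.
  intros Hx H eps Heps. destruct (H eps Heps) as [d [Hd Hd']].
  exists d; split; auto. intros z Hz E. apply Hd'; auto.
  rewrite Rminus_diag, Rabs_R0; auto.
Qed.

Lemma cont2_in_diag F A x : cont2_in F A A x x -> cont_in (fun z => F z z) A x.
Proof.
  intros H eps Heps. destruct (H eps Heps) as [d [Hd Hd']].
  exists d; split; auto.
Qed.

Lemma IVT_Icc (f : R -> R) lo hi t : lo <= hi ->
  (forall z, Icc lo hi z -> cont_in f (Icc lo hi) z) ->
  f lo <= t <= f hi -> exists z, Icc lo hi z /\ f z = t.
Proof.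
  intros Hle Hc Ht.
  (* extend [f] continuously to [R] by clamping its argument to [lo, hi] *)
  set (cl := fun z => Rmax lo (Rmin hi z)).
  assert (Hcl : forall z, Icc lo hi (cl z)).
  { intros z. unfold cl, Icc. split; [apply Rmax_l|].
    apply Rmax_lub; auto. apply Rmin_l. }
  assert (Hcl2 : forall z w, Rabs (cl z - cl w) <= Rabs (z - w)).
  { intros z w. unfold cl, Rmax, Rmin.
    repeat destruct Rle_dec; unfold Rabs; repeat destruct Rcase_abs; lra. }
  assert (Hcl3 : forall z, Icc lo hi z -> cl z = z).
  { intros z [H1 H2]. unfold cl, Rmax, Rmin. repeat destruct Rle_dec; lra. }
  set (g := fun z => f (cl z) - t).
  assert (Hg : continuity g).
  { intros z0 eps Heps.
    destruct (Hc (cl z0) (Hcl z0) eps Heps) as [d [Hd Hd']].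
    exists d; split; [lra|]. intros z [_ Hz]. simpl in Hz |- *. unfold Rdist in *.
    unfold g. replace (f (cl z) - t - (f (cl z0) - t)) with (f (cl z) - f (cl z0)) by ring.
    apply Hd'; auto. eapply Rle_lt_trans; [apply Hcl2|exact Hz]. }
  destruct (IVT_cor g lo hi Hg Hle) as [z [Hz Hgz]].
  { unfold g. rewrite !Hcl3; unfold Icc; try lra. nra. }
  exists z. split; [exact Hz|]. unfold g in Hgz. rewrite Hcl3 in Hgz; auto. lra.
Qed.

Section Monotone_bijection.
Variables f g : R -> R.
Hypothesis f_I01 : forall x, I01 x -> I01 (f x).
Hypothesis gf : forall x, I01 x -> g (f x) = x.
Hypothesis fg : forall x, I01 x -> f (g x) = x.
Hypothesis f_mono : forall x y, I01 x -> I01 y -> x <= y -> f x <= f y.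
Hypothesis g_mono : forall x y, I01 x -> I01 y -> x <= y -> g x <= g y.

(* The distance from [x] to [g (f x + eps)] is a modulus. *)
Lemma monotone_bijection_upper x eps : I01 x -> 0 < eps ->
  exists del, 0 < del /\ forall z, I01 z -> Rabs (z - x) < del -> f z < f x + eps.
Proof.
  intros Hx Heps. destruct (Rle_dec (f x + eps) 1) as [C|C].
  - assert (HI : I01 (f x + eps)) by (pose proof (f_I01 x Hx); unfold I01 in *; lra).
    assert (H0 : x <= g (f x + eps)) by (rewrite <- (gf x) at 1; auto; apply g_mono; auto; lra).
    exists (g (f x + eps) - x). split.
    + destruct (Rle_lt_or_eq_dec _ _ H0) as [L|E]; [lra|].
      pose proof (fg (f x + eps) HI) as H1. rewrite <- E in H1. lra.
    + intros z Hz E. destruct (Rle_dec (f x + eps) (f z)) as [C2|C2]; [|lra].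
      assert (g (f x + eps) <= g (f z)) by (apply g_mono; auto).
      rewrite gf in H; auto. apply Rabs_def2 in E. lra.
  - exists 1. split; [lra|]. intros z Hz _. pose proof (f_I01 z Hz). unfold I01 in *. lra.
Qed.

Lemma monotone_bijection_lower x eps : I01 x -> 0 < eps ->
  exists del, 0 < del /\ forall z, I01 z -> Rabs (z - x) < del -> f x - eps < f z.
Proof.
  intros Hx Heps. destruct (Rle_dec 0 (f x - eps)) as [C|C].
  - assert (HI : I01 (f x - eps)) by (pose proof (f_I01 x Hx); unfold I01 in *; lra).
    assert (H0 : g (f x - eps) <= x) by (rewrite <- (gf x) at 2; auto; apply g_mono; auto; lra).
    exists (x - g (f x - eps)). split.
    + destruct (Rle_lt_or_eq_dec _ _ H0) as [L|E]; [lra|].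
      pose proof (fg (f x - eps) HI) as H1. rewrite E in H1. lra.
    + intros z Hz E. destruct (Rle_dec (f z) (f x - eps)) as [C2|C2]; [|lra].
      assert (g (f z) <= g (f x - eps)) by (apply g_mono; auto).
      rewrite gf in H; auto. apply Rabs_def2 in E. lra.
  - exists 1. split; [lra|]. intros z Hz _. pose proof (f_I01 z Hz). unfold I01 in *. lra.
Qed.

Lemma monotone_bijection_cont x : I01 x -> cont_in f I01 x.
Proof.
  intros Hx eps Heps.
  destruct (monotone_bijection_upper x eps Hx Heps) as [d1 [Hd1 Up]].
  destruct (monotone_bijection_lower x eps Hx Heps) as [d2 [Hd2 Lo]].
  exists (Rmin d1 d2); split; [apply Rmin_pos; auto|].
  intros z Hz E.
  specialize (Up z Hz (Rlt_le_trans _ _ _ E (Rmin_l _ _))).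
  specialize (Lo z Hz (Rlt_le_trans _ _ _ E (Rmin_r _ _))).
  apply Rabs_def1; lra.
Qed.

End Monotone_bijection.

Definition is_glb (E : R -> Prop) (p : R) :=
  (forall s, E s -> p <= s) /\ (forall b, (forall s, E s -> b <= s) -> b <= p).

Lemma glb_exists (E : R -> Prop) : (exists s, E s) -> (exists b, forall s, E s -> b <= s) ->
  exists p, is_glb E p.
Proof.
  intros [s Hs] [b Hb].
  destruct (completeness (fun t => E (- t))) as [m [Hm1 Hm2]].
  { exists (- b). intros t Ht. specialize (Hb _ Ht). lra. }
  { exists (- s). rewrite Ropp_involutive. auto. }
  exists (- m). split.
  - intros t Ht. assert (- t <= m) by (apply Hm1; rewrite Ropp_involutive; auto). lra.
  - intros c Hc. assert (m <= - c) by (apply Hm2; intros t Ht; specialize (Hc _ Ht); lra).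
    lra.
Qed.

Lemma Icc_rescale lo hi p : lo < hi -> I01 p -> Icc lo hi (lo + (hi - lo) * p).
Proof. unfold I01, Icc. intros. split; nra. Qed.

Lemma I01_rescale lo hi z : lo < hi -> Icc lo hi z -> I01 (- lo / (hi - lo) + / (hi - lo) * z).
Proof.
  unfold I01, Icc. intros Hlt Hz.
  assert (Hw : 0 < / (hi - lo)) by (apply Rinv_0_lt_compat; lra).
  assert (Ew : (hi - lo) * / (hi - lo) = 1) by (field; lra).
  unfold Rdiv. split; nra.
Qed.

Section Rescaling.
Variables (U F : R -> R -> R) (lo hi : R).
Hypothesis Hlt : lo < hi.
Hypothesis HF : forall p q, I01 p -> I01 q ->
  F p q = (U (lo + (hi - lo) * p) (lo + (hi - lo) * q) - lo) / (hi - lo).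

Lemma cont2_in_square_of_rescaled : continuous_on01_2 F ->
  forall x y, Icc lo hi x -> Icc lo hi y -> cont2_in U (Icc lo hi) (Icc lo hi) x y.
Proof.
  intros Hc x y Hx Hy.
  set (f := fun z => - lo / (hi - lo) + / (hi - lo) * z).
  assert (Hf : forall z, Icc lo hi z -> I01 (f z)) by (intros; apply I01_rescale; auto).
  assert (H1 : cont2_in (fun p q => F (f p) (f q)) (Icc lo hi) (Icc lo hi) x y).
  { apply cont2_in_comp with (A := I01) (B := I01); try apply cont_in_affine; auto.
    exact (Hc (f x) (f y) (Hf x Hx) (Hf y Hy)). }
  apply (cont2_in_ext (fun p q => lo + (hi - lo) * F (f p) (f q))); auto.
  - intros p q Hp Hq. rewrite HF by auto. unfold f.
    replace (lo + (hi - lo) * (- lo / (hi - lo) + / (hi - lo) * p)) with p by (field; lra).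
    replace (lo + (hi - lo) * (- lo / (hi - lo) + / (hi - lo) * q)) with q by (field; lra).
    field. lra.
  - apply (cont_in_comp2 (fun z => lo + (hi - lo) * z) (fun _ => True)); auto using cont_in_affine.
Qed.

Lemma rescaled_cont_of_cont2_in_square :
  (forall x y, Icc lo hi x -> Icc lo hi y -> cont2_in U (Icc lo hi) (Icc lo hi) x y) ->
  continuous_on01_2 F.
Proof.
  intros Hc x y Hx Hy.
  set (f := fun z => lo + (hi - lo) * z).
  assert (Hf : forall z, I01 z -> Icc lo hi (f z)) by (intros; apply Icc_rescale; auto).
  assert (H1 : cont2_in (fun p q => U (f p) (f q)) I01 I01 x y).
  { apply cont2_in_comp with (A := Icc lo hi) (B := Icc lo hi); try apply cont_in_affine; auto. }
  apply (cont2_in_ext (fun p q => - lo / (hi - lo) + / (hi - lo) * U (f p) (f q))); auto.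
  - intros p q Hp Hq. rewrite HF by auto. unfold f. field. lra.
  - apply (cont_in_comp2 (fun z => - lo / (hi - lo) + / (hi - lo) * z) (fun _ => True));
      auto using cont_in_affine.
Qed.

End Rescaling.

Lemma underlying_tnorm_rescaled U e p q : 0 < e ->
  underlying_tnorm U e p q = (U (0 + (e - 0) * p) (0 + (e - 0) * q) - 0) / (e - 0).
Proof.
  intros. unfold underlying_tnorm. rewrite !Rminus_0_r, !Rplus_0_l. reflexivity.
Qed.

Lemma continuous_underlying_of_squares U e : 0 < e < 1 ->
  (forall x y, Icc 0 e x -> Icc 0 e y -> cont2_in U (Icc 0 e) (Icc 0 e) x y) ->
  (forall x y, Icc e 1 x -> Icc e 1 y -> cont2_in U (Icc e 1) (Icc e 1) x y) ->
  continuous_underlying U e.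
Proof.
  intros He HL HH. split.
  - apply (rescaled_cont_of_cont2_in_square U _ 0 e); [lra| |exact HL].
    intros. apply underlying_tnorm_rescaled. lra.
  - apply (rescaled_cont_of_cont2_in_square U _ e 1); [lra| |exact HH]. reflexivity.
Qed.

(** * Dyadic rationals *)

Definition dyadic (m : Z) (k : nat) : R := IZR m / 2 ^ k.

Lemma pow2_pos k : 0 < 2 ^ k.
Proof. apply pow_lt. lra. Qed.

Lemma dyadic_refine m k j : dyadic (m * 2 ^ Z.of_nat j) (k + j) = dyadic m k.
Proof.
  unfold dyadic. rewrite mult_IZR, <- pow_IZR, pow_add.
  pose proof (pow2_pos k). pose proof (pow2_pos j). field. lra.
Qed.

Lemma dyadic_lt_num m m' k : dyadic m k < dyadic m' k -> (m < m')%Z.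
Proof.
  unfold dyadic. intros H. apply lt_IZR. pose proof (pow2_pos k).
  apply Rmult_lt_reg_r with (/ 2 ^ k). apply Rinv_0_lt_compat; auto. exact H.
Qed.
Lemma dyadic_add m m' k : dyadic (m + m') k = dyadic m k + dyadic m' k.
Proof. unfold dyadic. rewrite plus_IZR. field. pose proof (pow2_pos k). lra. Qed.
Lemma dyadic_1 k : dyadic 1 k = / 2 ^ k.
Proof. unfold dyadic. field. pose proof (pow2_pos k). lra. Qed.
Lemma dyadic_0 k : dyadic 0 k = 0.
Proof. unfold dyadic. field. pose proof (pow2_pos k). lra. Qed.
Lemma dyadic_m1 k : dyadic (-1) k = - / 2 ^ k.
Proof. unfold dyadic. field. pose proof (pow2_pos k). lra. Qed.
Lemma dyadic_nat n : dyadic (Z.of_nat n) 0 = INR n.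
Proof. unfold dyadic. simpl. rewrite <- INR_IZR_INZ. field. Qed.

Lemma dyadic_floor z k : exists m, dyadic m k <= z < dyadic (m + 1) k.
Proof.
  destruct (archimed (z * 2 ^ k)) as [H1 H2].
  exists (up (z * 2 ^ k) - 1)%Z. pose proof (pow2_pos k).
  unfold dyadic. rewrite minus_IZR, plus_IZR, minus_IZR. simpl.
  split.
  - apply Rmult_le_reg_r with (2 ^ k); auto. unfold Rdiv. rewrite Rmult_assoc, Rinv_l; lra.
  - apply Rmult_lt_reg_r with (2 ^ k); auto. unfold Rdiv. rewrite Rmult_assoc, Rinv_l; lra.
Qed.

Lemma INR_lt_pow2 n : INR n < 2 ^ n.
Proof.
  induction n; [simpl; lra|]. rewrite S_INR. change (2 ^ S n) with (2 * 2 ^ n).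
  assert (1 <= 2 ^ n) by (apply pow_R1_Rle; lra). lra.
Qed.

Lemma inv_pow2_small eps : 0 < eps -> exists k, / 2 ^ k < eps.
Proof.
  intros Heps. destruct (archimed (/ eps)) as [H1 _].
  assert (Hp : 0 < / eps) by (apply Rinv_0_lt_compat; auto).
  assert (HN : (0 < up (/ eps))%Z) by (apply lt_IZR; lra).
  exists (Z.to_nat (up (/ eps))).
  assert (E : INR (Z.to_nat (up (/ eps))) = IZR (up (/ eps))).
  { rewrite INR_IZR_INZ, Z2Nat.id; auto. lia. }
  pose proof (INR_lt_pow2 (Z.to_nat (up (/ eps)))) as K.
  set (t := 2 ^ Z.to_nat (up (/ eps))) in *.
  assert (Ht : / eps < t) by lra.
  assert (Ht0 : 0 < t) by lra.
  assert (E1 : eps * / eps = 1) by (field; lra).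
  assert (E2 : t * / t = 1) by (field; lra).
  assert (1 < eps * t) by nra.
  assert (0 < / t) by (apply Rinv_0_lt_compat; auto).
  nra.
Qed.

Lemma eq0_of_le_inv_pow2 c t : 0 < c -> (forall k, Rabs t <= c * / 2 ^ k) -> t = 0.
Proof.
  intros Hpos Ht. destruct (Req_dec t 0) as [E|E]; [exact E|exfalso].
  assert (P0 : 0 < Rabs t / c) by (apply Rdiv_lt_0_compat; [apply Rabs_pos_lt|]; auto).
  destruct (inv_pow2_small _ P0) as [k Hk]. specialize (Ht k).
  assert (c * / 2 ^ k < c * (Rabs t / c)) by (apply Rmult_lt_compat_l; auto).
  replace (c * (Rabs t / c)) with (Rabs t) in H by (field; lra). lra.
Qed.

Lemma nat_above z : exists n : nat, z < INR n.
Proof.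
  destruct (Rlt_le_dec z 0) as [L|L]; [exists O; simpl; lra|].
  destruct (archimed z) as [H1 _].
  assert (HN : (0 < up z)%Z) by (apply lt_IZR; lra).
  exists (Z.to_nat (up z)). rewrite INR_IZR_INZ, Z2Nat.id; [lra|lia].
Qed.


(** * Representable uninorms from additive generators *)

Lemma continuity_pt_of_cont_in_open f lo hi x : lo < x < hi ->
  cont_in f (fun z => lo < z < hi) x -> continuity_pt f x.
Proof.
  intros Hx Hc eps Heps. destruct (Hc eps Heps) as [del [Hdel Hnear]].
  exists (Rmin del (Rmin (x - lo) (hi - x))).
  split; [repeat apply Rmin_pos; lra|].
  intros z [_ Hz]. simpl in Hz |- *. unfold Rdist in *.
  assert (Z1 : Rabs (z - x) < del) by (eapply Rlt_le_trans; [exact Hz|apply Rmin_l]).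
  assert (Z2 : Rabs (z - x) < Rmin (x - lo) (hi - x)) by (eapply Rlt_le_trans; [exact Hz|apply Rmin_r]).
  assert (Z3 : Rabs (z - x) < x - lo) by (eapply Rlt_le_trans; [exact Z2|apply Rmin_l]).
  assert (Z4 : Rabs (z - x) < hi - x) by (eapply Rlt_le_trans; [exact Z2|apply Rmin_r]).
  apply Rabs_def2 in Z3. apply Rabs_def2 in Z4.
  apply Hnear; [lra|exact Z1].
Qed.

Section Rescaled_generator.
Variables (W : R -> R -> R) (G : R -> R) (f a d : R).
Hypothesis Had : a < d.
Hypothesis Hf : a < f < d.
Hypothesis W_open : forall x y, a < x < d -> a < y < d -> a < W x y < d.
Hypothesis W_comm : forall x y, a < x < d -> a < y < d -> W x y = W y x.
Hypothesis W_assoc : forall x y z, a < x < d -> a < y < d -> a < z < d -> W x (W y z) = W (W x y) z.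
Hypothesis W_mono : forall x1 x2 y, a < x1 < d -> a < x2 < d -> a < y < d -> x1 <= x2 -> W x1 y <= W x2 y.
Hypothesis W_neutral : forall x, a < x < d -> W f x = x.
Hypothesis G_strict : forall x y, a < x < d -> a < y < d -> x < y -> G x < G y.
Hypothesis G_cont : forall x, a < x < d -> cont_in G (fun z => a < z < d) x.
Hypothesis G_f : G f = 0.
Hypothesis G_to_minus_infty : forall M, exists del, 0 < del /\ forall x, a < x < a + del -> G x < M.
Hypothesis G_to_plus_infty : forall M, exists del, 0 < del /\ forall x, d - del < x < d -> M < G x.
Hypothesis G_W : forall x y, a < x < d -> a < y < d -> G (W x y) = G x + G y.

Definition scale (z : R) := a + (d - a) * z.
Definition unscale (z : R) := (z - a) / (d - a).

Lemma scale_unscale z : scale (unscale z) = z. Proof. unfold scale, unscale. field. lra. Qed.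
Lemma unscale_scale z : unscale (scale z) = z. Proof. unfold scale, unscale. field. lra. Qed.
Lemma scale_open z : 0 < z < 1 -> a < scale z < d.
Proof. intros. unfold scale. split; nra. Qed.
Lemma scale_lt x y : x < y -> scale x < scale y.
Proof. unfold scale. intros. nra. Qed.
Lemma unscale_open z : a < z < d -> 0 < unscale z < 1.
Proof.
  intros. unfold unscale.
  assert (Hw : 0 < / (d - a)) by (apply Rinv_0_lt_compat; lra).
  assert (Ew : (d - a) * / (d - a) = 1) by (field; lra).
  unfold Rdiv. split; nra.
Qed.
Lemma unscale_le x y : x <= y -> unscale x <= unscale y.
Proof.
  intros. unfold unscale, Rdiv. apply Rmult_le_compat_r; [left; apply Rinv_0_lt_compat|]; lra.
Qed.

Definition Wr (x y : R) := unscale (W (scale x) (scale y)).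

Lemma Wr_open x y : 0 < x < 1 -> 0 < y < 1 -> 0 < Wr x y < 1.
Proof. intros. unfold Wr. apply unscale_open, W_open; apply scale_open; auto. Qed.
Lemma Wr_comm x y : 0 < x < 1 -> 0 < y < 1 -> Wr x y = Wr y x.
Proof. intros. unfold Wr. rewrite W_comm; auto; apply scale_open; auto. Qed.
Lemma Wr_assoc x y z : 0 < x < 1 -> 0 < y < 1 -> 0 < z < 1 -> Wr x (Wr y z) = Wr (Wr x y) z.
Proof. intros. unfold Wr. rewrite !scale_unscale, W_assoc; auto; apply scale_open; auto. Qed.
Lemma Wr_mono x1 x2 y : 0 < x1 < 1 -> 0 < x2 < 1 -> 0 < y < 1 -> x1 <= x2 -> Wr x1 y <= Wr x2 y.
Proof.
  intros. unfold Wr. apply unscale_le, W_mono; try apply scale_open; auto.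
  unfold scale. nra.
Qed.

Definition f_rescaled := unscale f.

Lemma f_rescaled_open : 0 < f_rescaled < 1.
Proof. apply unscale_open; auto. Qed.
Lemma Wr_neutral x : 0 < x < 1 -> Wr f_rescaled x = x.
Proof.
  intros. unfold Wr, f_rescaled. rewrite scale_unscale, W_neutral, unscale_scale; auto.
  apply scale_open; auto.
Qed.

(* [representable] leaves the corners [(0,1)] and [(1,0)] free; they are sent to [1]. *)
Definition Vr (x y : R) : R :=
  if Rle_dec 1 (Rmax x y) then 1 else if Rle_dec (Rmin x y) 0 then 0 else Wr x y.

Lemma Vr_1_l y : y <= 1 -> Vr 1 y = 1.
Proof. intros. unfold Vr. destruct Rle_dec as [L|L]; auto. exfalso. apply L, Rmax_l. Qed.
Lemma Vr_1_r y : y <= 1 -> Vr y 1 = 1.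
Proof. intros. unfold Vr. destruct Rle_dec as [L|L]; auto. exfalso. apply L, Rmax_r. Qed.
Lemma Vr_0_l y : 0 <= y < 1 -> Vr 0 y = 0.
Proof.
  intros. unfold Vr, Rmax, Rmin. repeat destruct Rle_dec; lra.
Qed.
Lemma Vr_0_r y : 0 <= y < 1 -> Vr y 0 = 0.
Proof.
  intros. unfold Vr, Rmax, Rmin. repeat destruct Rle_dec; lra.
Qed.
Lemma Vr_open x y : 0 < x < 1 -> 0 < y < 1 -> Vr x y = Wr x y.
Proof.
  intros. unfold Vr, Rmax, Rmin. repeat destruct Rle_dec; lra.
Qed.

Lemma I01_cases x : I01 x -> x = 0 \/ 0 < x < 1 \/ x = 1.
Proof. unfold I01. intros. lra. Qed.

Ltac add_Wr_open := repeat match goal with |- context [Wr ?p ?q] =>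
  lazymatch goal with H : 0 < Wr p q < 1 |- _ => fail | _ =>
    assert (0 < Wr p q < 1) by (apply Wr_open; lra) end end.

Ltac Vr_simpl := repeat (add_Wr_open; first
  [ match goal with |- context [Vr 1 ?y] => rewrite (Vr_1_l y) by lra end
  | match goal with |- context [Vr ?y 1] => rewrite (Vr_1_r y) by lra end
  | match goal with |- context [Vr 0 ?y] => rewrite (Vr_0_l y) by lra end
  | match goal with |- context [Vr ?y 0] => rewrite (Vr_0_r y) by lra end
  | match goal with |- context [Vr ?x ?y] => rewrite (Vr_open x y) by lra end ]); add_Wr_open.

Ltac I01_split x := let H := fresh in
  match goal with Hx : I01 x |- _ => destruct (I01_cases x Hx) as [H|[H|H]]; [subst x| |subst x] end.

Lemma Vr_uninorm : uninorm Vr f_rescaled.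
Proof.
  pose proof f_rescaled_open.
  split; [unfold I01; lra|]. split; [|split; [|split; [|split]]].
  - intros x y Hx Hy. I01_split x; I01_split y; Vr_simpl; unfold I01; lra.
  - intros x y Hx Hy. I01_split x; I01_split y; Vr_simpl; auto. apply Wr_comm; auto.
  - intros x y z Hx Hy Hz. I01_split x; I01_split y; I01_split z; Vr_simpl; auto.
    apply Wr_assoc; auto.
  - intros x1 x2 y H1 H2 Hy Le. I01_split x1; I01_split x2; I01_split y; Vr_simpl; try lra.
    apply Wr_mono; auto.
  - intros x Hx. I01_split x; Vr_simpl; auto. apply Wr_neutral; auto.
Qed.

Lemma Gscale_continuity_pt x : 0 < x < 1 -> continuity_pt (fun z => G (scale z)) x.
Proof.
  intros Hx. apply (continuity_pt_of_cont_in_open _ 0 1); auto.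
  apply (cont_in_comp G scale (fun z => a < z < d)).
  - apply G_cont, scale_open; auto.
  - exact (cont_in_affine a (d - a) _ x).
  - exact scale_open.
Qed.

Lemma Gscale_to_minus_infty M : exists del, 0 < del /\ forall x, 0 < x < del -> G (scale x) < M.
Proof.
  destruct (G_to_minus_infty M) as [del [Hdel Hnear]].
  exists (del / (d - a)). split; [apply Rdiv_lt_0_compat; lra|].
  intros x Hx. apply Hnear. unfold scale. split; [nra|].
  assert ((d - a) * x < (d - a) * (del / (d - a))) by (apply Rmult_lt_compat_l; lra).
  replace ((d - a) * (del / (d - a))) with del in H by (field; lra). lra.
Qed.

Lemma Gscale_to_plus_infty M : exists del, 0 < del /\ forall x, 1 - del < x < 1 -> M < G (scale x).
Proof.
  destruct (G_to_plus_infty M) as [del [Hdel Hnear]].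
  exists (del / (d - a)). split; [apply Rdiv_lt_0_compat; lra|].
  intros x Hx. apply Hnear. unfold scale. split; [|nra].
  assert ((d - a) * (1 - del / (d - a)) < (d - a) * x) by (apply Rmult_lt_compat_l; lra).
  replace ((d - a) * (1 - del / (d - a))) with (d - a - del) in H by (field; lra). lra.
Qed.

Lemma Vr_representable : representable Vr f_rescaled.
Proof.
  split; [exact f_rescaled_open|]. split; [exact Vr_uninorm|].
  exists (fun z => G (scale z)).
  split; [|split; [|split; [|split; [|split; [|split; [|split]]]]]].
  - intros x y Hx Hy Lt. apply G_strict, scale_lt; auto using scale_open.
  - exact Gscale_continuity_pt.
  - unfold f_rescaled. rewrite scale_unscale. exact G_f.
  - exact Gscale_to_minus_infty.
  - exact Gscale_to_plus_infty.
  - intros x y Hx Hy. rewrite Vr_open; auto. split; [apply Wr_open; auto|].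
    unfold Wr. rewrite scale_unscale. apply G_W; apply scale_open; auto.
  - intros y Hy. split; [apply Vr_0_l | apply Vr_0_r]; lra.
  - intros y Hy. split; [apply Vr_1_l | apply Vr_1_r]; lra.
Qed.

Lemma representable_of_generator :
  exists V f', representable V f' /\ linear_transform_on W V a d.
Proof.
  exists Vr, f_rescaled. split; [exact Vr_representable|].
  intros x y Hx Hy. fold (unscale x) (unscale y).
  rewrite Vr_open by (apply unscale_open; auto).
  unfold Wr. rewrite !scale_unscale. unfold unscale. field. lra.
Qed.

End Rescaled_generator.

(** * Uninorms with continuous underlying functions *)

Definition band_decomposition (U1 U2 : R -> R -> R) : Prop :=
  exists a d : R,
    I01 a /\ I01 d /\ idempotent U1 a /\ idempotent U1 d /\ a < d /\
    (exists (V1 : R -> R -> R) (f1 : R), representable V1 f1 /\ linear_transform_on U1 V1 a d) /\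
    (exists (V2 : R -> R -> R) (f2 : R), representable V2 f2 /\ linear_transform_on U2 V2 a d) /\
    (forall x y, in_outer a d x -> in_outer a d y -> U1 x y = U2 x y).

Section Uninorm.
Variables (U : R -> R -> R) (e : R).
Hypothesis HU : uninorm U e.
Hypothesis He : 0 < e < 1.

Lemma U_I01 x y : I01 x -> I01 y -> I01 (U x y).
Proof. destruct HU as [_ [H _]]. auto. Qed.
Lemma U_comm x y : I01 x -> I01 y -> U x y = U y x.
Proof. destruct HU as [_ [_ [H _]]]. auto. Qed.
Lemma U_assoc x y z : I01 x -> I01 y -> I01 z -> U x (U y z) = U (U x y) z.
Proof. destruct HU as [_ [_ [_ [H _]]]]. auto. Qed.
Lemma U_mono_l x1 x2 y : I01 x1 -> I01 x2 -> I01 y -> x1 <= x2 -> U x1 y <= U x2 y.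
Proof. destruct HU as [_ [_ [_ [_ [H _]]]]]. auto. Qed.
Lemma U_neutral_l x : I01 x -> U e x = x.
Proof. destruct HU as [_ [_ [_ [_ [_ H]]]]]. auto. Qed.
Lemma e_I01 : I01 e.
Proof. unfold I01; lra. Qed.
Lemma U_mono_r x y1 y2 : I01 x -> I01 y1 -> I01 y2 -> y1 <= y2 -> U x y1 <= U x y2.
Proof. intros. rewrite (U_comm x y1), (U_comm x y2); auto. apply U_mono_l; auto. Qed.
Lemma U_neutral_r x : I01 x -> U x e = x.
Proof. intros. rewrite U_comm; auto using e_I01. apply U_neutral_l; auto. Qed.
Lemma U_mono x1 x2 y1 y2 : I01 x1 -> I01 x2 -> I01 y1 -> I01 y2 -> x1 <= x2 -> y1 <= y2 ->
  U x1 y1 <= U x2 y2.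
Proof.
  intros. apply Rle_trans with (U x2 y1). apply U_mono_l; auto. apply U_mono_r; auto.
Qed.

Hypothesis Hc : continuous_underlying U e.

Lemma cont_lower x y : Icc 0 e x -> Icc 0 e y -> cont2_in U (Icc 0 e) (Icc 0 e) x y.
Proof.
  apply (cont2_in_square_of_rescaled U (underlying_tnorm U e)); [lra| |apply Hc].
  intros. apply underlying_tnorm_rescaled. lra.
Qed.

Lemma cont_upper x y : Icc e 1 x -> Icc e 1 y -> cont2_in U (Icc e 1) (Icc e 1) x y.
Proof.
  apply (cont2_in_square_of_rescaled U (underlying_tconorm U e)); [lra|reflexivity|apply Hc].
Qed.

Definition inverse_pair (w w' : R) := I01 w /\ I01 w' /\ U w w' = e.

Lemma inverse_pair_sym w w' : inverse_pair w w' -> inverse_pair w' w.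
Proof. intros [H1 [H2 H3]]. split; [exact H2|split; [exact H1|]]. rewrite U_comm; auto. Qed.

Lemma translate_cancel w w' x : inverse_pair w w' -> I01 x -> U (U x w) w' = x.
Proof.
  intros [H1 [H2 H3]] Hx. rewrite <- U_assoc; auto. rewrite H3. apply U_neutral_r; auto.
Qed.

Lemma translate_inj w w' x y : inverse_pair w w' -> I01 x -> I01 y -> U x w = U y w -> x = y.
Proof.
  intros Hw Hx Hy E. rewrite <- (translate_cancel w w' x), <- (translate_cancel w w' y); auto. rewrite E; auto.
Qed.

Lemma inverse_lt_e w w' : inverse_pair w w' -> e < w -> w' < e.
Proof.
  intros [H1 [H2 H3]] Hw. destruct (Rlt_le_dec w' e) as [L|L]; auto.
  assert (U w e <= U w w') by (apply U_mono_r; auto using e_I01).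
  rewrite U_neutral_r in H; auto. lra.
Qed.

Lemma inverse_gt_e w w' : inverse_pair w w' -> w < e -> e < w'.
Proof.
  intros [H1 [H2 H3]] Hw. destruct (Rlt_le_dec e w') as [L|L]; auto.
  assert (U w w' <= U w e) by (apply U_mono_r; auto using e_I01).
  rewrite U_neutral_r in H; auto. lra.
Qed.

Lemma translate_strict w w' x y : inverse_pair w w' -> I01 x -> I01 y -> x < y -> U x w < U y w.
Proof.
  intros Hw Hx Hy Lt. destruct (Hw) as [H1 _].
  assert (U x w <= U y w) by (apply U_mono_l; auto; lra).
  destruct H; auto. apply (translate_inj w w') in H; auto. lra.
Qed.

Lemma translate_cont w w' x : inverse_pair w w' -> I01 x -> cont_in (fun z => U z w) I01 x.
Proof.
  intros Hw Hx. pose proof Hw as [Iw [Iw' _]].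
  apply monotone_bijection_cont with (g := fun z => U z w'); intros; auto.
  - apply U_I01; auto.
  - apply (translate_cancel w w'); auto.
  - apply (translate_cancel w' w); auto using inverse_pair_sym.
  - apply U_mono_l; auto.
Qed.

Lemma inverse_pair_mul w w' z z' : inverse_pair w w' -> inverse_pair z z' -> inverse_pair (U w z) (U w' z').
Proof.
  intros [H1 [H2 H3]] [H4 [H5 H6]]. split; [apply U_I01; auto|split; [apply U_I01; auto|]].
  rewrite <- (U_assoc w z); try apply U_I01; auto.
  rewrite (U_assoc z w' z'); auto. rewrite (U_comm z w'); auto.
  rewrite <- (U_assoc w' z z'); auto. rewrite H6, U_neutral_r; auto.
Qed.

Lemma inverse_unique w w1 w2 : inverse_pair w w1 -> inverse_pair w w2 -> w1 = w2.
Proof.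
  intros [H1 [H2 H3]] [H4 [H5 H6]].
  rewrite <- (U_neutral_r w1); auto. rewrite <- H6. rewrite U_assoc; auto.
  rewrite (U_comm w1 w); auto. rewrite H3. apply U_neutral_l; auto.
Qed.

Fixpoint upow (w : R) (n : nat) : R :=
  match n with O => e | S n => U (upow w n) w end.

Lemma upow_I01 w n : I01 w -> I01 (upow w n).
Proof. intros Hw; induction n; simpl; auto using e_I01. apply U_I01; auto. Qed.

Lemma upow_add w m n : I01 w -> U (upow w m) (upow w n) = upow w (m + n).
Proof.
  intros Hw. induction n.
  - simpl. rewrite Nat.add_0_r. apply U_neutral_r, upow_I01; auto.
  - simpl. rewrite Nat.add_succ_r. simpl. rewrite U_assoc; try apply upow_I01; auto.
    rewrite IHn; auto.
Qed.

Lemma upow_mul w z n : I01 w -> I01 z -> upow (U w z) n = U (upow w n) (upow z n).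
Proof.
  intros Hw Hz. induction n.
  - simpl. rewrite U_neutral_l; auto using e_I01.
  - simpl. rewrite IHn.
    assert (Pw := upow_I01 w n Hw). assert (Pz := upow_I01 z n Hz).
    rewrite <- (U_assoc (upow w n) (upow z n)); try apply U_I01; auto.
    rewrite (U_assoc (upow z n) w z); auto.
    rewrite (U_comm (upow z n) w); auto.
    rewrite <- (U_assoc w (upow z n) z); auto.
    rewrite (U_assoc (upow w n) w); try apply U_I01; auto.
Qed.

Lemma upow_inverse_pair w w' n : inverse_pair w w' -> inverse_pair (upow w n) (upow w' n).
Proof.
  intros Hw. induction n.
  - simpl. split; [exact e_I01|split; [exact e_I01|]]. apply U_neutral_l, e_I01.
  - simpl. apply inverse_pair_mul; auto.
Qed.

Lemma upow_sq w n : I01 w -> upow (U w w) n = upow w (n + n).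
Proof. intros Hw. rewrite upow_mul, upow_add; auto. Qed.

Lemma upow_ge_e w n : I01 w -> e <= w -> e <= upow w n.
Proof.
  intros Hw Hew. induction n; simpl; [lra|].
  apply Rle_trans with (U (upow w n) e).
  - rewrite U_neutral_r; auto using upow_I01.
  - apply U_mono_r; auto using upow_I01, e_I01.
Qed.

Lemma upow_le_e w n : I01 w -> w <= e -> upow w n <= e.
Proof.
  intros Hw Hew. induction n; simpl; [lra|].
  apply Rle_trans with (U (upow w n) e).
  - apply U_mono_r; auto using upow_I01, e_I01.
  - rewrite U_neutral_r; auto using upow_I01.
Qed.

Lemma solve_upper x t : Icc e 1 x -> Icc x 1 t -> exists z, Icc e 1 z /\ U x z = t.
Proof.
  intros Hx Ht. unfold Icc in *.
  assert (Ix : I01 x) by (unfold I01; lra).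
  apply IVT_Icc with (f := fun z => U x z); [lra| |].
  - intros z Hz. apply cont2_in_fst with (A := Icc e 1); auto. apply cont_upper; auto.
  - simpl. rewrite U_neutral_r; auto. split; [lra|].
    assert (U e 1 <= U x 1) by (apply U_mono_l; unfold I01; lra).
    rewrite (U_neutral_l 1) in H by (unfold I01; lra). lra.
Qed.

Lemma solve_lower x t : Icc 0 e x -> Icc 0 x t -> exists z, Icc 0 e z /\ U x z = t.
Proof.
  intros Hx Ht. unfold Icc in *.
  assert (Ix : I01 x) by (unfold I01; lra).
  apply IVT_Icc with (f := fun z => U x z); [lra| |].
  - intros z Hz. apply cont2_in_fst with (A := Icc 0 e); auto. apply cont_lower; auto.
  - simpl. rewrite U_neutral_r; auto. split; [|lra].
    assert (U x 0 <= U e 0) by (apply U_mono_l; unfold I01; lra).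
    rewrite (U_neutral_l 0) in H by (unfold I01; lra). destruct (U_I01 x 0); auto; unfold I01; lra.
Qed.

Lemma idempotent_absorbs_upper p t : Icc e 1 p -> U p p = p -> Icc p 1 t -> U p t = t.
Proof.
  intros Hp Hpp Ht. destruct (solve_upper p t Hp Ht) as [z [Hz E]].
  unfold Icc in *.
  rewrite <- E. rewrite U_assoc; unfold I01; try lra. rewrite Hpp; auto.
Qed.

Lemma idempotent_absorbs_lower p t : Icc 0 e p -> U p p = p -> Icc 0 p t -> U p t = t.
Proof.
  intros Hp Hpp Ht. destruct (solve_lower p t Hp Ht) as [z [Hz E]].
  unfold Icc in *.
  rewrite <- E. rewrite U_assoc; unfold I01; try lra. rewrite Hpp; auto.
Qed.

Lemma sup_upow_idempotent z p : Icc e 1 z -> is_lub (fun s => exists n, s = upow z n) p -> U p p = p.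
Proof.
  intros Hz [Hp1 Hp2]. unfold Icc in Hz.
  assert (Iz : I01 z) by (unfold I01; lra).
  assert (Hep : e <= p) by (apply Hp1; exists O; reflexivity).
  assert (Hp1' : p <= 1).
  { apply Hp2. intros s [n ->]. apply upow_I01; auto. }
  assert (Ip : I01 p) by (unfold I01; lra).
  assert (Ge : p <= U p p).
  { rewrite <- (U_neutral_l p) at 1; auto. apply U_mono_l; auto using e_I01. }
  destruct (Rle_lt_or_eq_dec _ _ Ge) as [Lt|Eq]; [|auto].
  exfalso.
  destruct (cont_upper p p) with (eps := U p p - p) as [d [Hd Hd']]; unfold Icc; try lra.
  assert (Ex : exists n, p - d < upow z n).
  { apply Classical_Pred_Type.not_all_not_ex. intros Hn.
    assert (p <= p - d). { apply Hp2. intros s [n ->]. specialize (Hn n). lra. }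
    lra. }
  destruct Ex as [n Hn].
  assert (Hpn : upow z n <= p) by (apply Hp1; exists n; auto).
  assert (Hen : e <= upow z n) by (apply upow_ge_e; [exact Iz|lra]).
  specialize (Hd' (upow z n) (upow z n)).
  rewrite upow_add in Hd'; auto.
  assert (upow z (n + n) <= p) by (apply Hp1; exists (n + n)%nat; auto).
  assert (Rabs (upow z (n + n) - U p p) < U p p - p).
  { apply Hd'; unfold Icc; try lra; rewrite Rabs_left1; lra. }
  apply Rabs_def2 in H0. lra.
Qed.

Lemma inf_upow_idempotent z p : Icc 0 e z -> is_glb (fun s => exists n, s = upow z n) p -> U p p = p.
Proof.
  intros Hz [Hp1 Hp2]. unfold Icc in Hz.
  assert (Iz : I01 z) by (unfold I01; lra).
  assert (Hep : p <= e) by (apply Hp1; exists O; reflexivity).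
  assert (Hp1' : 0 <= p).
  { apply Hp2. intros s [n ->]. apply upow_I01; auto. }
  assert (Ip : I01 p) by (unfold I01; lra).
  assert (Ge : U p p <= p).
  { apply Rle_trans with (U e p); [apply U_mono_l; auto using e_I01 | rewrite U_neutral_l; auto; lra]. }
  destruct (Rle_lt_or_eq_dec _ _ Ge) as [Lt|Eq]; [|auto].
  exfalso.
  destruct (cont_lower p p) with (eps := p - U p p) as [d [Hd Hd']]; unfold Icc; try lra.
  assert (Ex : exists n, upow z n < p + d).
  { apply Classical_Pred_Type.not_all_not_ex. intros Hn.
    assert (p + d <= p). { apply Hp2. intros s [n ->]. specialize (Hn n). lra. }
    lra. }
  destruct Ex as [n Hn].
  assert (Hpn : p <= upow z n) by (apply Hp1; exists n; auto).
  assert (Hen : upow z n <= e) by (apply upow_le_e; [exact Iz|lra]).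
  assert (H0n : 0 <= upow z n) by (destruct (upow_I01 z n); auto).
  specialize (Hd' (upow z n) (upow z n)).
  rewrite upow_add in Hd'; auto.
  assert (p <= upow z (n + n)) by (apply Hp1; exists (n + n)%nat; auto).
  assert (Rabs (upow z (n + n) - U p p) < p - U p p).
  { apply Hd'; unfold Icc; try lra; rewrite Rabs_right; lra. }
  match goal with H : Rabs _ < _ |- _ => apply Rabs_def2 in H end. lra.
Qed.


(* The idempotent is the supremum of the powers of [z]. *)
Lemma idempotent_below_fixed z w : Icc e 1 z -> e < z -> I01 w -> e <= w -> U w z = w ->
  exists p, e < p <= w /\ U p p = p.
Proof.
  intros Hz Hez Iw Hew Hfix. assert (Iz : I01 z) by (unfold Icc, I01 in *; lra).
  assert (Hfix_n : forall n, U w (upow z n) = w).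
  { induction n; simpl; [apply U_neutral_r; auto|].
    rewrite U_assoc, IHn; auto using upow_I01. }
  destruct (completeness (fun s => exists n, s = upow z n)) as [p Hp].
  { exists 1. intros s [n ->]. apply upow_I01; auto. }
  { exists e, O. reflexivity. }
  exists p. split; [split|].
  - apply Rlt_le_trans with z; auto. apply (proj1 Hp). exists 1%nat. simpl.
    rewrite U_neutral_l; auto.
  - apply (proj2 Hp). intros s [n ->]. rewrite <- (Hfix_n n).
    rewrite <- (U_neutral_l (upow z n)) at 1; auto using upow_I01.
    apply U_mono_l; auto using e_I01, upow_I01.
  - apply (sup_upow_idempotent z); auto.
Qed.

Lemma U_interchange x y p q : I01 x -> I01 y -> I01 p -> I01 q -> U (U x p) (U y q) = U (U x y) (U p q).
Proof.
  intros. rewrite <- (U_assoc x p); try apply U_I01; auto.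
  rewrite (U_assoc p y q); auto. rewrite (U_comm p y); auto.
  rewrite <- (U_assoc y p q); auto. rewrite (U_assoc x y); try apply U_I01; auto.
Qed.

Lemma translate_strict_rev w w' x y : inverse_pair w w' -> I01 x -> I01 y -> U x w < U y w -> x < y.
Proof.
  intros Hw Hx Hy Lt. destruct (Rlt_le_dec x y) as [L|L]; auto.
  destruct Hw as [H1 _]. assert (U y w <= U x w) by (apply U_mono_l; auto). lra.
Qed.

Lemma upow_1 w : I01 w -> upow w 1 = w.
Proof. intros. simpl. apply U_neutral_l; auto. Qed.

Definition zpow (w w' : R) (m : Z) : R :=
  if Z_le_dec 0 m then upow w (Z.to_nat m) else upow w' (Z.to_nat (- m)).

Lemma zpow_I01 w w' m : I01 w -> I01 w' -> I01 (zpow w w' m).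
Proof. intros. unfold zpow. destruct Z_le_dec; apply upow_I01; auto. Qed.

Lemma zpow_succ w w' m : inverse_pair w w' -> zpow w w' (m + 1) = U (zpow w w' m) w.
Proof.
  intros Hw. pose proof Hw as [H1 [H2 H3]]. unfold zpow.
  destruct (Z_le_dec 0 (m + 1)); destruct (Z_le_dec 0 m).
  - replace (Z.to_nat (m + 1)) with (S (Z.to_nat m)) by lia. reflexivity.
  - assert (m = -1)%Z by lia. subst. simpl. rewrite U_neutral_l; auto. rewrite U_comm; auto; try (symmetry; auto).
  - lia.
  - replace (Z.to_nat (- m)) with (S (Z.to_nat (- (m + 1)))) by lia. simpl.
    symmetry. apply (translate_cancel w' w); auto using upow_I01. apply inverse_pair_sym; auto.
Qed.

Lemma zpow_pred w w' m : inverse_pair w w' -> zpow w w' (m - 1) = U (zpow w w' m) w'.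
Proof.
  intros Hw. pose proof Hw as [H1 [H2 H3]].
  replace (zpow w w' m) with (zpow w w' (m - 1 + 1)) by (f_equal; lia).
  rewrite zpow_succ; auto. symmetry. apply (translate_cancel w w'); auto using zpow_I01.
Qed.

Lemma zpow_add w w' m n : inverse_pair w w' -> zpow w w' (m + n) = U (zpow w w' m) (zpow w w' n).
Proof.
  intros Hw. pose proof Hw as [H1 [H2 H3]]. revert n. apply Z.peano_ind.
  - rewrite Z.add_0_r. unfold zpow at 3. simpl. rewrite U_neutral_r; auto using zpow_I01.
  - intros n IH. rewrite <- Z.add_1_r. rewrite Z.add_assoc, !zpow_succ, IH; auto.
    rewrite U_assoc; auto using zpow_I01.
  - intros n IH. rewrite <- Z.sub_1_r.
    replace (m + (n - 1))%Z with (m + n - 1)%Z by lia.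
    rewrite !zpow_pred, IH; auto. rewrite U_assoc; auto using zpow_I01.
Qed.

Lemma zpow_sq w w' m : I01 w -> I01 w' ->
  zpow (U w w) (U w' w') m = zpow w w' (2 * m).
Proof.
  intros. unfold zpow. destruct (Z_le_dec 0 m); destruct (Z_le_dec 0 (2 * m)); try lia.
  - rewrite upow_sq; auto. f_equal. lia.
  - rewrite upow_sq; auto. f_equal. lia.
Qed.

(* [U p q = U (U (U p w') q) w] reduces continuity at [(x, y)] to continuity at [(U x w', y)]. *)
Lemma cont2_in_conjugate w w' (A B : R -> Prop) x y :
  inverse_pair w w' -> I01 x -> B y ->
  (forall z, A z -> I01 z) -> (forall q, B q -> I01 q) ->
  (exists r, 0 < r /\ forall z, I01 z -> Rabs (z - x) < r -> A (U z w')) ->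
  cont2_in U A B (U x w') y -> cont2_in U I01 B x y.
Proof.
  intros Hw Hx Hy HA HB [r [Hr Hnear]] HUxy.
  assert (Iw : I01 w) by apply Hw. assert (Iw' : I01 w') by apply Hw.
  apply cont2_in_local with (r := r); [exact Hr|].
  apply (cont2_in_ext (fun p q => U (U (U p w') q) w)).
  - split; [exact Hx|]. rewrite Rminus_diag, Rabs_R0. exact Hr.
  - exact Hy.
  - intros p q [Hp _] Hq. specialize (HB q Hq).
    rewrite <- (U_assoc p), (U_comm w' q), (U_assoc p q); auto.
    apply (translate_cancel w' w); auto using U_I01, inverse_pair_sym.
  - apply (cont_in_comp2 (fun z => U z w) I01 (fun p q => U (U p w') q)).
    + apply (translate_cont w w'); auto. apply U_I01; auto. apply HA, Hnear; auto.
      rewrite Rminus_diag, Rabs_R0. exact Hr.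
    + apply (cont2_in_comp U A B _ _ (fun p => U p w') (fun q => q)); auto using cont_in_id.
      * apply cont_in_subset with (A := I01); [intros z [Hz _]; exact Hz|].
        apply (translate_cont w' w); auto using inverse_pair_sym.
      * intros z [Hz Hzx]. auto.
    + intros p q [Hp _] Hq. apply U_I01; auto. apply U_I01; auto.
Qed.

(** * The band generated by an invertible element *)

Section Invertible_element.
Variables u v : R.
Hypothesis Huv : inverse_pair u v.
Hypothesis Heu : e < u.
Variables a d : R.
Hypothesis Hd : is_lub (fun s => exists n, s = upow u n) d.
Hypothesis Ha : is_glb (fun s => exists n, s = upow v n) a.

Lemma u_I01 : I01 u. Proof. destruct Huv; auto. Qed.
Lemma v_I01 : I01 v. Proof. destruct Huv as [_ [H _]]; auto. Qed.
Lemma v_lt_e : v < e.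
Proof. apply (inverse_lt_e u); auto. Qed.

Lemma upow_u_inverse n : inverse_pair (upow u n) (upow v n).
Proof. apply upow_inverse_pair; auto. Qed.
Lemma upow_v_inverse n : inverse_pair (upow v n) (upow u n).
Proof. apply inverse_pair_sym, upow_inverse_pair; auto. Qed.
Lemma upow_u_I01 n : I01 (upow u n). Proof. apply upow_I01, u_I01. Qed.
Lemma upow_v_I01 n : I01 (upow v n). Proof. apply upow_I01, v_I01. Qed.

Lemma upow_u_lt_succ n : upow u n < upow u (S n).
Proof.
  induction n.
  - simpl. rewrite U_neutral_l; auto using u_I01.
  - change (upow u (S n) < U (upow u (S n)) u). change (upow u (S n)) with (U (upow u n) u) at 1.
    apply (translate_strict u v); auto using upow_u_I01.
Qed.

Lemma upow_v_succ_lt n : upow v (S n) < upow v n.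
Proof.
  induction n.
  - simpl. rewrite U_neutral_l; auto using v_I01. apply v_lt_e.
  - change (U (upow v (S n)) v < upow v (S n)). change (upow v (S n)) with (U (upow v n) v) at 2.
    apply (translate_strict v u); auto using upow_v_I01. apply inverse_pair_sym; auto.
Qed.

Lemma upow_u_lt_d n : upow u n < d.
Proof.
  destruct Hd as [H1 _]. eapply Rlt_le_trans; [apply upow_u_lt_succ|]. apply H1. exists (S n); auto.
Qed.
Lemma a_lt_upow_v n : a < upow v n.
Proof.
  destruct Ha as [H1 _]. eapply Rle_lt_trans; [|apply upow_v_succ_lt]. apply H1. exists (S n); auto.
Qed.
Lemma e_lt_d : e < d. Proof. apply (upow_u_lt_d O). Qed.
Lemma a_lt_e : a < e. Proof. apply (a_lt_upow_v O). Qed.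
Lemma u_lt_d : u < d.
Proof. assert (H := upow_u_lt_d 1). simpl in H. rewrite U_neutral_l in H; auto using u_I01. Qed.
Lemma a_lt_v : a < v.
Proof. assert (H := a_lt_upow_v 1). simpl in H. rewrite U_neutral_l in H; auto using v_I01. Qed.
Lemma d_le_1 : d <= 1.
Proof. destruct Hd as [_ H2]. apply H2. intros s [n ->]. destruct (upow_u_I01 n); auto. Qed.
Lemma a_nonneg : 0 <= a.
Proof. destruct Ha as [_ H2]. apply H2. intros s [n ->]. destruct (upow_v_I01 n); auto. Qed.

Lemma upow_u_above x : x < d -> exists n, x < upow u n.
Proof.
  intros Hx. apply Classical_Pred_Type.not_all_not_ex. intros Hn.
  destruct Hd as [_ H2]. assert (d <= x).
  { apply H2. intros s [n ->]. specialize (Hn n). lra. }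
  lra.
Qed.
Lemma upow_v_below x : a < x -> exists n, upow v n < x.
Proof.
  intros Hx. apply Classical_Pred_Type.not_all_not_ex. intros Hn.
  destruct Ha as [_ H2]. assert (x <= a).
  { apply H2. intros s [n ->]. specialize (Hn n). lra. }
  lra.
Qed.

Lemma d_idempotent : U d d = d.
Proof. apply (sup_upow_idempotent u); auto. unfold Icc. destruct u_I01. lra. Qed.
Lemma a_idempotent : U a a = a.
Proof. apply (inf_upow_idempotent v); auto. unfold Icc. destruct v_I01. pose proof v_lt_e. lra. Qed.

Definition mid x := a < x < d.
Lemma mid_I01 x : mid x -> I01 x.
Proof. unfold mid, I01. pose proof a_nonneg. pose proof d_le_1. lra. Qed.
Lemma mid_upow_u n : mid (upow u n).
Proof. split; [|apply upow_u_lt_d]. pose proof a_lt_e. pose proof (upow_ge_e u n u_I01). lra. Qed.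
Lemma mid_upow_v n : mid (upow v n).
Proof. split; [apply a_lt_upow_v|]. pose proof e_lt_d. pose proof (upow_le_e v n v_I01). pose proof v_lt_e. lra. Qed.
Lemma mid_e : mid e.
Proof. split; [apply a_lt_e|apply e_lt_d]. Qed.

Lemma mid_U x y : mid x -> mid y -> mid (U x y).
Proof.
  intros Hx Hy. assert (Ix := mid_I01 x Hx). assert (Iy := mid_I01 y Hy).
  destruct (upow_u_above x) as [n Hn]; [apply Hx|]. destruct (upow_u_above y) as [m Hm]; [apply Hy|].
  destruct (upow_v_below x) as [n' Hn']; [apply Hx|]. destruct (upow_v_below y) as [m' Hm']; [apply Hy|].
  split.
  - apply Rlt_le_trans with (upow v (n' + m')). apply a_lt_upow_v.
    rewrite <- upow_add; auto using v_I01. apply U_mono; auto using upow_v_I01; lra.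
  - apply Rle_lt_trans with (upow u (n + m)); [|apply upow_u_lt_d].
    rewrite <- upow_add; auto using u_I01. apply U_mono; auto using upow_u_I01; lra.
Qed.

Lemma d_absorbs x : Icc d 1 x -> U x d = x.
Proof.
  intros Hx. pose proof e_lt_d. pose proof d_le_1. unfold Icc in Hx.
  rewrite U_comm; try (unfold I01; lra). apply idempotent_absorbs_upper; auto using d_idempotent; unfold Icc; lra.
Qed.
Lemma a_absorbs x : Icc 0 a x -> U x a = x.
Proof.
  intros Hx. pose proof a_lt_e. pose proof a_nonneg. unfold Icc in Hx.
  rewrite U_comm; try (unfold I01; lra). apply idempotent_absorbs_lower; auto using a_idempotent; unfold Icc; lra.
Qed.

Lemma outer_I01 x : in_outer a d x -> I01 x.
Proof. pose proof a_lt_e. pose proof e_lt_d. unfold in_outer, I01. intros [Hx|Hx]; lra. Qed.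

Lemma outer_translate_fixed x : in_outer a d x -> U x u = x /\ U x v = x.
Proof.
  intros Hx. pose proof e_lt_d. pose proof d_le_1. pose proof a_lt_e. pose proof a_nonneg.
  pose proof u_lt_d. pose proof a_lt_v. pose proof v_lt_e.
  assert (Ix : I01 x) by (unfold in_outer, I01 in *; lra).
  destruct Hx as [Hx|Hx].
  - assert (E : U x v = x).
    { apply Rle_antisym.
      + rewrite <- (U_neutral_r x) at 2; auto. apply U_mono_r; auto using v_I01, e_I01; lra.
      + rewrite <- (a_absorbs x) at 1; [|unfold Icc; lra]. apply U_mono_r; auto using v_I01; unfold I01; lra. }
    split; auto. rewrite <- E at 1. apply (translate_cancel v u); auto. apply inverse_pair_sym; auto.
  - assert (E : U x u = x).
    { apply Rle_antisym.
      + rewrite <- (d_absorbs x) at 2; [|unfold Icc; lra]. apply U_mono_r; auto using u_I01; unfold I01; lra.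
      + rewrite <- (U_neutral_r x) at 1; auto. apply U_mono_r; auto using u_I01, e_I01; lra. }
    split; auto. rewrite <- E at 1. apply (translate_cancel u v); auto.
Qed.

Lemma no_idempotent_between p : e < p < d -> U p p = p -> False.
Proof.
  intros Hp Hpp. destruct (upow_u_above p) as [n Hn]; [lra|].
  pose proof d_le_1.
  assert (E : U p (upow u n) = upow u n).
  { apply idempotent_absorbs_upper; auto; unfold Icc; try lra. destruct (upow_u_I01 n); lra. }
  assert (E2 : U e (upow u n) = upow u n) by (apply U_neutral_l, upow_u_I01).
  assert (E3 : U p (upow u n) = U e (upow u n)) by (rewrite E, E2; auto).
  apply (translate_inj (upow u n) (upow v n)) in E3; auto using upow_u_inverse, e_I01.
  lra. unfold I01; lra.
Qed.

Lemma translate_above_e x : mid x -> exists n, e < U x (upow u n) /\ mid (U x (upow u n)).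
Proof.
  intros Hx. destruct (upow_v_below x) as [n Hn]; [apply Hx|]. exists n. split.
  - destruct (upow_v_inverse n) as [_ [_ E]]. rewrite <- E.
    apply (translate_strict (upow u n) (upow v n)); auto using upow_u_inverse, upow_v_I01, mid_I01.
  - apply mid_U; auto using mid_upow_u.
Qed.

Lemma U_strict_upper x x' y : e <= x -> x < x' -> x' < d -> e <= y -> y < d -> U x y < U x' y.
Proof.
  intros H1 H2 H3 H4 H5. pose proof d_le_1. pose proof a_lt_e.
  assert (Ix : I01 x) by (unfold I01; lra). assert (Ix' : I01 x') by (unfold I01; lra).
  assert (Iy : I01 y) by (unfold I01; lra).
  destruct (solve_upper x x') as [z [Hz Ez]]; unfold Icc; try lra.
  assert (Iz : I01 z) by (unfold Icc, I01 in *; lra).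
  destruct (U_mono_l x x' y) as [Lt|Eq]; auto; [lra|]. exfalso.
  assert (Hze : e < z).
  { destruct (Rle_lt_or_eq_dec e z) as [L|L]; [apply Hz|auto|].
    subst z. rewrite U_neutral_r in Ez; auto. lra. }
  assert (Hw : mid (U x y)) by (apply mid_U; unfold mid; lra).
  assert (Hew : e <= U x y).
  { rewrite <- (U_neutral_l e) at 1; auto using e_I01. apply U_mono; auto using e_I01. }
  destruct (idempotent_below_fixed z (U x y)) as [p [Hp Hpp]]; auto using U_I01.
  - rewrite <- (U_assoc x y z), (U_comm y z), (U_assoc x z y), Ez; auto.
  - apply (no_idempotent_between p); auto. destruct Hw. lra.
Qed.

Lemma U_strict_mid x x' y : mid x -> mid x' -> mid y -> x < x' -> U x y < U x' y.
Proof.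
  intros Hx Hx' Hy Lt.
  destruct (translate_above_e x Hx) as [n [Xe XM]]. destruct (translate_above_e y Hy) as [m [Ye YM]].
  assert (Ix := mid_I01 _ Hx). assert (Ix' := mid_I01 _ Hx'). assert (Iy := mid_I01 _ Hy).
  assert (X'M : mid (U x' (upow u n))) by (apply mid_U; auto using mid_upow_u).
  assert (XX : U x (upow u n) < U x' (upow u n)) by (apply (translate_strict _ (upow v n)); auto using upow_u_inverse).
  assert (K : U (U x (upow u n)) (U y (upow u m)) < U (U x' (upow u n)) (U y (upow u m))).
  { apply U_strict_upper; try lra; apply XM || apply X'M || apply YM. }
  rewrite (U_interchange x y (upow u n) (upow u m)), (U_interchange x' y (upow u n) (upow u m)) in K; auto using upow_u_I01.
  apply (translate_strict_rev (U (upow u n) (upow u m)) (U (upow v n) (upow v m))); auto using U_I01, upow_u_I01.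
  apply inverse_pair_mul; apply upow_u_inverse.
Qed.

Lemma cont_mid_lower x y : 0 <= x < d -> Icc 0 e y -> cont2_in U I01 (Icc 0 e) x y.
Proof.
  intros Hx Hy. pose proof d_le_1.
  destruct (Rlt_le_dec x e) as [L|L].
  - apply cont2_in_local with (r := e - x); [lra|].
    apply cont2_in_subset with (A := Icc 0 e) (B := Icc 0 e); auto.
    + intros z [Hz1 Hz2]. apply Rabs_def2 in Hz2. unfold Icc, I01 in *. lra.
    + apply cont_lower; auto. unfold Icc; lra.
  - destruct (upow_u_above x) as [n Hn]; [lra|].
    assert (Ix : I01 x) by (unfold I01; lra).
    set (X := U x (upow v n)).
    assert (XL : X < e).
    { destruct (upow_u_inverse n) as [_ [_ E]]. rewrite <- E. unfold X.
      apply (translate_strict (upow v n) (upow u n)); auto using upow_v_inverse, upow_u_I01. }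
    apply (cont2_in_conjugate (upow u n) (upow v n) (Icc 0 e)); auto using upow_u_inverse.
    + intros z Hz. unfold Icc, I01 in *; lra.
    + intros q Hq. unfold Icc, I01 in *; lra.
    + destruct (translate_cont (upow v n) (upow u n) x (upow_v_inverse n) Ix (e - X))
        as [r [Hr Hnear]]; [lra|].
      exists r. split; [exact Hr|]. intros z Hz Hzx.
      specialize (Hnear z Hz Hzx). fold X in Hnear. apply Rabs_def2 in Hnear.
      destruct (U_I01 z (upow v n)); auto using upow_v_I01. unfold Icc; lra.
    + apply cont_lower; auto. destruct (U_I01 x (upow v n)); auto using upow_v_I01.
      unfold Icc, X in *; lra.
Qed.

Lemma cont_mid_upper x y : a < x <= 1 -> Icc e 1 y -> cont2_in U I01 (Icc e 1) x y.
Proof.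
  intros Hx Hy. pose proof a_nonneg.
  destruct (Rlt_le_dec e x) as [L|L].
  - apply cont2_in_local with (r := x - e); [lra|].
    apply cont2_in_subset with (A := Icc e 1) (B := Icc e 1); auto.
    + intros z [Hz1 Hz2]. apply Rabs_def2 in Hz2. unfold Icc, I01 in *. lra.
    + apply cont_upper; auto. unfold Icc; lra.
  - destruct (upow_v_below x) as [n Hn]; [lra|].
    assert (Ix : I01 x) by (unfold I01; lra).
    set (X := U x (upow u n)).
    assert (XL : e < X).
    { destruct (upow_v_inverse n) as [_ [_ E]]. rewrite <- E. unfold X.
      apply (translate_strict (upow u n) (upow v n)); auto using upow_u_inverse, upow_v_I01. }
    apply (cont2_in_conjugate (upow v n) (upow u n) (Icc e 1)); auto using upow_v_inverse.
    + intros z Hz. unfold Icc, I01 in *; lra.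
    + intros q Hq. unfold Icc, I01 in *; lra.
    + destruct (translate_cont (upow u n) (upow v n) x (upow_u_inverse n) Ix (X - e))
        as [r [Hr Hnear]]; [lra|].
      exists r. split; [exact Hr|]. intros z Hz Hzx.
      specialize (Hnear z Hz Hzx). fold X in Hnear. apply Rabs_def2 in Hnear.
      destruct (U_I01 z (upow u n)); auto using upow_u_I01. unfold Icc; lra.
    + apply cont_upper; auto. destruct (U_I01 x (upow u n)); auto using upow_u_I01.
      unfold Icc, X in *; lra.
Qed.

(** * Dyadic powers and the additive generator *)

Lemma usqrt_exists y : exists z, e <= y <= 1 -> e <= z <= y /\ U z z = y.
Proof.
  destruct (Classical_Prop.classic (e <= y <= 1)) as [Hy|Hy]; [|exists 0; tauto].
  assert (Iy : I01 y) by (unfold I01; lra).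
  destruct (IVT_Icc (fun z => U z z) e y y) as [z [Hz E]]; [lra| | |].
  - intros z Hz. apply cont2_in_diag. apply cont2_in_subset with (A := Icc e 1) (B := Icc e 1).
    + unfold Icc; intros; lra.
    + unfold Icc; intros; lra.
    + apply cont_upper; unfold Icc in *; lra.
  - simpl. rewrite U_neutral_l; auto using e_I01. split; [lra|].
    rewrite <- (U_neutral_l y) at 1; auto. apply U_mono_l; auto using e_I01. lra.
  - exists z. intros _. unfold Icc in Hz. split; auto.
Qed.

Definition usqrt (y : R) : R := proj1_sig (constructive_indefinite_description _ (usqrt_exists y)).
Lemma usqrt_spec y : e <= y <= 1 -> e <= usqrt y <= y /\ U (usqrt y) (usqrt y) = y.
Proof. unfold usqrt. destruct constructive_indefinite_description as [z Hz]. simpl. auto. Qed.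

Fixpoint root (k : nat) : R := match k with O => u | S k => usqrt (root k) end.

Lemma root_bounds k : e < root k <= u.
Proof.
  pose proof u_I01 as [_ Hu1]. induction k; simpl; [lra|].
  destruct (usqrt_spec (root k)) as [H1 H2]; [lra|].
  split; [|lra]. destruct (Rle_lt_or_eq_dec e (usqrt (root k))) as [L|L]; [lra|auto|].
  rewrite <- L in H2. rewrite U_neutral_l in H2; auto using e_I01. lra.
Qed.
Lemma root_sq k : U (root (S k)) (root (S k)) = root k.
Proof. simpl. pose proof (root_bounds k). pose proof u_I01 as [_ Hu1]. apply usqrt_spec; lra. Qed.
Lemma root_I01 k : I01 (root k).
Proof. pose proof (root_bounds k). pose proof u_I01 as [_ Hu1]. unfold I01; lra. Qed.
Lemma mid_root k : mid (root k).
Proof. pose proof (root_bounds k). pose proof u_lt_d. pose proof a_lt_e. unfold mid; lra. Qed.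

Lemma upow_root k : upow (root k) (2 ^ k) = u.
Proof.
  induction k.
  - simpl. apply U_neutral_l, u_I01.
  - rewrite Nat.pow_succ_r'. replace (2 * 2 ^ k)%nat with (2 ^ k + 2 ^ k)%nat by lia.
    rewrite <- upow_sq; auto using root_I01. rewrite root_sq. auto.
Qed.

(* [root k ^ (2 ^ k) = u], so this is the inverse of [root k]. *)
Definition root_inv (k : nat) : R := U (upow (root k) (2 ^ k - 1)) v.

Lemma root_inverse_pair k : inverse_pair (root k) (root_inv k).
Proof.
  split; [apply root_I01|split].
  - unfold root_inv. apply U_I01; auto using upow_I01, root_I01, v_I01.
  - unfold root_inv. rewrite U_assoc; auto using upow_I01, root_I01, v_I01.
    rewrite <- (upow_1 (root k)) at 1; auto using root_I01. rewrite upow_add; auto using root_I01.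
    replace (1 + (2 ^ k - 1))%nat with (2 ^ k)%nat.
    + rewrite upow_root. destruct Huv as [_ [_ E]]. auto.
    + assert (0 < 2 ^ k)%nat by (apply Nat.neq_0_lt_0, Nat.pow_nonzero; lia). lia.
Qed.

Lemma mid_upow w n : mid w -> mid (upow w n).
Proof. intros Hw. induction n; simpl; auto using mid_e. apply mid_U; auto. Qed.

Lemma mid_root_inv k : mid (root_inv k).
Proof. unfold root_inv. apply mid_U; [apply mid_upow, mid_root|]. pose proof (mid_upow_v 1%nat) as H. simpl in H. rewrite U_neutral_l in H; auto using v_I01. Qed.

Lemma mid_zpow w w' m : mid w -> mid w' -> mid (zpow w w' m).
Proof. intros. unfold zpow. destruct Z_le_dec; apply mid_upow; auto. Qed.

(* [dpow m k] plays the role of [u ^ (m / 2 ^ k)]. *)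
Definition dpow (m : Z) (k : nat) : R := zpow (root k) (root_inv k) m.

Lemma dpow_I01 m k : I01 (dpow m k). Proof. apply zpow_I01; apply mid_I01; auto using mid_root, mid_root_inv. Qed.
Lemma mid_dpow m k : mid (dpow m k). Proof. apply mid_zpow; auto using mid_root, mid_root_inv. Qed.

Lemma root_inv_sq k : U (root_inv (S k)) (root_inv (S k)) = root_inv k.
Proof.
  apply (inverse_unique (root k)); [|apply root_inverse_pair].
  rewrite <- root_sq. apply inverse_pair_mul; apply root_inverse_pair.
Qed.

Lemma dpow_double m k : dpow (2 * m) (S k) = dpow m k.
Proof.
  unfold dpow. rewrite <- zpow_sq. rewrite root_sq, root_inv_sq. auto.
  apply root_I01. apply mid_I01, mid_root_inv.
Qed.

Lemma dpow_refine m k j : dpow (m * 2 ^ Z.of_nat j) (k + j) = dpow m k.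
Proof.
  induction j.
  - simpl. rewrite Z.mul_1_r, Nat.add_0_r. auto.
  - rewrite Nat.add_succ_r. rewrite Nat2Z.inj_succ, Z.pow_succ_r by lia.
    replace (m * (2 * 2 ^ Z.of_nat j))%Z with (2 * (m * 2 ^ Z.of_nat j))%Z by ring.
    rewrite dpow_double. auto.
Qed.

Lemma dpow_succ m k : dpow (m + 1) k = U (dpow m k) (root k).
Proof. unfold dpow. apply zpow_succ, root_inverse_pair. Qed.

Lemma dpow_lt_succ m k : dpow m k < dpow (m + 1) k.
Proof.
  rewrite dpow_succ. rewrite <- (U_neutral_l (dpow m k)) at 1; auto using dpow_I01.
  rewrite (U_comm (dpow m k)); auto using dpow_I01, root_I01.
  apply U_strict_mid; auto using mid_e, mid_root, mid_dpow. apply root_bounds.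
Qed.

Lemma dpow_strict_mono m m' k : (m < m')%Z -> dpow m k < dpow m' k.
Proof.
  intros Lt. replace m' with (m + Z.of_nat (S (Z.to_nat (m' - m - 1))))%Z by lia.
  generalize (Z.to_nat (m' - m - 1)). intros t. induction t.
  - simpl. apply dpow_lt_succ.
  - eapply Rlt_trans; [exact IHt|].
    replace (m + Z.of_nat (S (S t)))%Z with (m + Z.of_nat (S t) + 1)%Z by lia. apply dpow_lt_succ.
Qed.

Lemma dpow_lt m k m' k' : dyadic m k < dyadic m' k' -> dpow m k < dpow m' k'.
Proof.
  intros H.
  rewrite <- (dyadic_refine m k k'), <- (dyadic_refine m' k' k), (Nat.add_comm k' k) in H.
  rewrite <- (dpow_refine m k k'), <- (dpow_refine m' k' k), (Nat.add_comm k' k).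
  apply dpow_strict_mono, (dyadic_lt_num _ _ _ H).
Qed.

Lemma dpow_add m m' k : U (dpow m k) (dpow m' k) = dpow (m + m') k.
Proof. unfold dpow. rewrite zpow_add; auto. apply root_inverse_pair. Qed.

Lemma dpow_0 k : dpow 0 k = e.
Proof. reflexivity. Qed.
Lemma dpow_1 k : dpow 1 k = root k.
Proof. unfold dpow, zpow. simpl. apply U_neutral_l, root_I01. Qed.
Lemma dpow_m1 k : dpow (-1) k = root_inv k.
Proof. unfold dpow, zpow. simpl. apply U_neutral_l, mid_I01, mid_root_inv. Qed.
Lemma dpow_nat n : dpow (Z.of_nat n) 0 = upow u n.
Proof. unfold dpow, zpow. destruct Z_le_dec; [|lia]. rewrite Nat2Z.id. reflexivity. Qed.
Lemma root_inv_0 : root_inv 0 = v.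
Proof. unfold root_inv. simpl. apply U_neutral_l, v_I01. Qed.
Lemma dpow_neg_nat n : dpow (- Z.of_nat n) 0 = upow v n.
Proof.
  unfold dpow, zpow. destruct Z_le_dec.
  - assert (n = O) by lia. subst. reflexivity.
  - rewrite Z.opp_involutive, Nat2Z.id, root_inv_0. reflexivity.
Qed.

(* The additive generator [gen x = sup {m / 2 ^ k | u ^ (m / 2 ^ k) <= x}], meaningful on [mid]. *)
Definition below_set (x : R) (q : R) : Prop := exists m k, q = dyadic m k /\ dpow m k <= x.
Definition gen (x : R) : R := epsilon (inhabits 0) (is_lub (below_set x)).

Lemma gen_lub x : mid x -> is_lub (below_set x) (gen x).
Proof.
  intros Hx. unfold gen. apply epsilon_spec.
  destruct (upow_u_above x) as [n Hn]; [apply Hx|]. destruct (upow_v_below x) as [n' Hn']; [apply Hx|].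
  destruct (completeness (below_set x)) as [l Hl].
  - exists (dyadic (Z.of_nat n) 0). intros q [m [k [-> Hm]]].
    destruct (Rle_lt_dec (dyadic m k) (dyadic (Z.of_nat n) 0)) as [L|L]; auto.
    apply dpow_lt in L. rewrite dpow_nat in L. lra.
  - exists (dyadic (- Z.of_nat n') 0). exists (- Z.of_nat n')%Z, O. split; auto.
    rewrite dpow_neg_nat. lra.
  - exists l; auto.
Qed.

Lemma dyadic_le_gen x m k : mid x -> dpow m k <= x -> dyadic m k <= gen x.
Proof. intros Hx H. apply (gen_lub x Hx). exists m, k. auto. Qed.

Lemma gen_le_dyadic x m k : mid x -> x < dpow m k -> gen x <= dyadic m k.
Proof.
  intros Hx H. apply (gen_lub x Hx). intros q [m' [k' [-> Hm]]].
  destruct (Rle_lt_dec (dyadic m' k') (dyadic m k)) as [L|L]; auto.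
  apply dpow_lt in L. lra.
Qed.

Lemma gen_dpow m k : gen (dpow m k) = dyadic m k.
Proof.
  apply Rle_antisym.
  - apply (gen_lub _ (mid_dpow m k)). intros q [m' [k' [-> Hm]]].
    destruct (Rle_lt_dec (dyadic m' k') (dyadic m k)) as [L|L]; auto.
    apply dpow_lt in L. lra.
  - apply dyadic_le_gen; auto using mid_dpow. lra.
Qed.

Lemma gen_mono x y : mid x -> mid y -> x <= y -> gen x <= gen y.
Proof.
  intros Hx Hy Le. apply (gen_lub x Hx). intros q [m [k [-> Hm]]].
  apply dyadic_le_gen; auto. lra.
Qed.

Lemma dpow_le_of_lt_gen x m k : mid x -> dyadic m k < gen x -> dpow m k <= x.
Proof.
  intros Hx H. destruct (Rle_lt_dec (dpow m k) x) as [L|L]; auto.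
  apply gen_le_dyadic in L; auto. lra.
Qed.
Lemma lt_dpow_of_gen_lt x m k : mid x -> gen x < dyadic m k -> x < dpow m k.
Proof.
  intros Hx H. destruct (Rle_lt_dec (dpow m k) x) as [L|L]; auto.
  apply dyadic_le_gen in L; auto. lra.
Qed.

Lemma gen_e : gen e = 0.
Proof. rewrite <- (dpow_0 0), gen_dpow. apply dyadic_0. Qed.

Lemma gen_U_approx x y k : mid x -> mid y ->
  Rabs (gen (U x y) - (gen x + gen y)) <= 4 * / 2 ^ k.
Proof.
  intros Hx Hy. assert (Ix := mid_I01 _ Hx). assert (Iy := mid_I01 _ Hy).
  assert (HM : mid (U x y)) by (apply mid_U; auto).
  destruct (dyadic_floor (gen x) k) as [m1 [A1 B1]].
  destruct (dyadic_floor (gen y) k) as [m2 [A2 B2]].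
  rewrite dyadic_add, dyadic_1 in B1, B2.
  pose proof (dyadic_m1 k) as Em1. pose proof (pow2_pos k).
  assert (L1 : dpow (m1 + -1) k <= x) by (apply dpow_le_of_lt_gen; auto; rewrite dyadic_add; lra).
  assert (L2 : dpow (m2 + -1) k <= y) by (apply dpow_le_of_lt_gen; auto; rewrite dyadic_add; lra).
  assert (U1 : x < dpow (m1 + 1) k) by (apply lt_dpow_of_gen_lt; auto; rewrite dyadic_add, dyadic_1; lra).
  assert (U2 : y < dpow (m2 + 1) k) by (apply lt_dpow_of_gen_lt; auto; rewrite dyadic_add, dyadic_1; lra).
  assert (Lo : dpow (m1 + -1 + (m2 + -1)) k <= U x y).
  { rewrite <- dpow_add. apply U_mono; auto using dpow_I01. }
  assert (Hi : U x y < dpow (m1 + 1 + (m2 + 1)) k).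
  { rewrite <- dpow_add. apply Rlt_le_trans with (U (dpow (m1 + 1) k) y).
    - apply U_strict_mid; auto using mid_dpow.
    - apply U_mono_r; auto using dpow_I01. lra. }
  apply dyadic_le_gen in Lo; auto. apply gen_le_dyadic in Hi; auto.
  rewrite !dyadic_add, Em1 in Lo. rewrite !dyadic_add, dyadic_1 in Hi.
  apply Rabs_le. lra.
Qed.

Lemma gen_U x y : mid x -> mid y -> gen (U x y) = gen x + gen y.
Proof.
  intros Hx Hy. apply Rminus_diag_uniq, (eq0_of_le_inv_pow2 4); [lra|].
  intros k. apply gen_U_approx; auto.
Qed.

Lemma root_near_e eps : 0 < eps -> exists k, root k < e + eps.
Proof.
  intros Heps. destruct (Classical_Prop.classic (exists k, root k < e + eps)) as [H|H]; auto.
  exfalso.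
  assert (H' : forall k, e + eps <= root k).
  { intros k. destruct (Rle_lt_dec (e + eps) (root k)); auto. exfalso; apply H; eauto. }
  assert (HG : exists l, is_glb (fun s => exists k, s = root k) l).
  { apply glb_exists.
    - exists u. exists O. auto.
    - exists e. intros s [k ->]. pose proof (root_bounds k). lra. }
  destruct HG as [l [Hl1 Hl2]].
  assert (le : e + eps <= l). { apply Hl2. intros s [k ->]. auto. }
  assert (lu : l <= u). { apply Hl1. exists O. auto. }
  pose proof u_lt_d. pose proof u_I01 as [_ Hu1].
  assert (Il : I01 l) by (unfold I01; lra).
  apply (no_idempotent_between l); [lra|].
  apply Rle_antisym.
  - apply Hl2. intros s [k ->]. rewrite <- root_sq. apply U_mono; auto using root_I01;
    apply Hl1; exists (S k); auto.
  - apply Rle_trans with (U e l). rewrite U_neutral_l; auto; lra. apply U_mono_l; auto using e_I01. lra.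
Qed.

Lemma gen_strict x y : mid x -> mid y -> x < y -> gen x < gen y.
Proof.
  intros Hx Hy Lt. assert (Ix := mid_I01 _ Hx).
  pose proof (cont_mid_upper x e) as C.
  destruct C with (eps := y - x) as [del [Hdel Hdel']].
  { destruct Hx. pose proof d_le_1. lra. }
  { unfold Icc; lra. }
  { lra. }
  destruct (root_near_e del Hdel) as [k Hk].
  pose proof (root_bounds k).
  assert (K : U x (root k) < y).
  { specialize (Hdel' x (root k) Ix). rewrite U_neutral_r in Hdel'; auto.
    assert (Rabs (U x (root k) - x) < y - x).
    { apply Hdel'. unfold Icc. pose proof (root_I01 k) as [_ ?]. lra.
      replace (x - x) with 0 by ring. rewrite Rabs_R0; auto.
      rewrite Rabs_right; lra. }
    apply Rabs_def2 in H0. lra. }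
  apply Rlt_le_trans with (gen (U x (root k))).
  - rewrite gen_U; auto using mid_root. rewrite <- dpow_1, gen_dpow, dyadic_1.
    assert (0 < / 2 ^ k) by (apply Rinv_0_lt_compat, pow2_pos). lra.
  - apply gen_mono; auto using mid_U, mid_root. lra.
Qed.

Lemma root_inv_lt_e k : root_inv k < e.
Proof.
  destruct (root_inverse_pair k) as [_ [_ E]]. pose proof (root_bounds k).
  destruct (Rlt_le_dec (root_inv k) e) as [L|L]; auto.
  assert (U (root k) e <= U (root k) (root_inv k)) by (apply U_mono_r; auto using root_I01, e_I01, mid_I01, mid_root_inv).
  rewrite U_neutral_r in H0; auto using root_I01. lra.
Qed.

Lemma gen_cont x : mid x -> cont_in gen mid x.
Proof.
  intros Hx eps Heps. destruct (inv_pow2_small eps Heps) as [k Hk].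
  assert (Ix := mid_I01 _ Hx).
  set (xp := U x (root k)). set (xm := U x (root_inv k)).
  assert (Hxp : x < xp).
  { unfold xp. rewrite <- (U_neutral_r x) at 1; auto. rewrite !(U_comm x); auto using e_I01, root_I01.
    apply U_strict_mid; auto using mid_e, mid_root. apply root_bounds. }
  assert (Hxm : xm < x).
  { unfold xm. rewrite <- (U_neutral_r x) at 2; auto. rewrite !(U_comm x); auto using e_I01, mid_I01, mid_root_inv.
    apply U_strict_mid; auto using mid_e, mid_root_inv. apply root_inv_lt_e. }
  assert (Mp : mid xp) by (apply mid_U; auto using mid_root).
  assert (Mm : mid xm) by (apply mid_U; auto using mid_root_inv).
  assert (Ep : gen xp = gen x + / 2 ^ k).
  { unfold xp. rewrite gen_U, <- dpow_1, gen_dpow, dyadic_1; auto using mid_root. }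
  assert (Em : gen xm = gen x - / 2 ^ k).
  { unfold xm. rewrite gen_U, <- dpow_m1, gen_dpow, dyadic_m1; auto using mid_root_inv. }
  exists (Rmin (xp - x) (x - xm)). split. { apply Rmin_pos; lra. }
  intros y Hy E.
  assert (E1 : Rabs (y - x) < xp - x) by (eapply Rlt_le_trans; [exact E|apply Rmin_l]).
  assert (E2 : Rabs (y - x) < x - xm) by (eapply Rlt_le_trans; [exact E|apply Rmin_r]).
  apply Rabs_def2 in E1. apply Rabs_def2 in E2.
  assert (A1 : gen y <= gen xp) by (apply gen_mono; auto; lra).
  assert (A2 : gen xm <= gen y) by (apply gen_mono; auto; lra).
  apply Rabs_def1; lra.
Qed.

Lemma gen_to_minus_infty M : exists del, 0 < del /\ forall x, a < x < a + del -> gen x < M.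
Proof.
  destruct (nat_above (- M)) as [n Hn].
  exists (upow v n - a).
  pose proof (a_lt_upow_v n). pose proof a_nonneg. split; [lra|].
  intros x Hx.
  assert (xM : mid x).
  { split; [lra|]. pose proof (mid_upow_v n) as [_ ?]. lra. }
  apply Rle_lt_trans with (dyadic (- Z.of_nat n) 0).
  - apply gen_le_dyadic; auto. rewrite dpow_neg_nat. lra.
  - unfold dyadic. simpl. rewrite opp_IZR, <- INR_IZR_INZ. lra.
Qed.

Lemma gen_to_plus_infty M : exists del, 0 < del /\ forall x, d - del < x < d -> M < gen x.
Proof.
  destruct (nat_above M) as [n Hn].
  exists (d - upow u n). pose proof (upow_u_lt_d n). split; [lra|].
  intros x Hx.
  assert (xM : mid x).
  { split; [|lra]. pose proof (mid_upow_u n) as [? _]. lra. }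
  apply Rlt_le_trans with (dyadic (Z.of_nat n) 0).
  - rewrite dyadic_nat. auto.
  - apply dyadic_le_gen; auto. rewrite dpow_nat. lra.
Qed.


Section Translate.
Variables (U2 : R -> R -> R) (g c : R).
Hypothesis HU2 : uninorm U2 g.
Hypothesis Hgc : (g = u /\ c = v) \/ (g = v /\ c = u).
Hypothesis HU2_U : forall s t, I01 s -> I01 t -> U2 s t = U (U s c) t.

Lemma g_c_mid : mid g /\ mid c.
Proof.
  pose proof a_lt_e. pose proof e_lt_d. pose proof u_lt_d. pose proof a_lt_v. pose proof v_lt_e.
  unfold mid. destruct Hgc as [[-> ->]|[-> ->]]; lra.
Qed.

Lemma g_c_inverse : inverse_pair g c.
Proof. destruct Hgc as [[-> ->]|[-> ->]]; auto using inverse_pair_sym. Qed.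

Lemma g_open : 0 < g < 1.
Proof. pose proof a_nonneg. pose proof d_le_1. destruct g_c_mid as [[? ?] _]. lra. Qed.

Let c_I01 : I01 c := proj1 (proj2 g_c_inverse).
Let g_I01 : I01 g := proj1 g_c_inverse.

Lemma U2_U_translate s t : I01 s -> I01 t -> U2 s t = U s (U t c).
Proof.
  intros Hs Ht. destruct HU2 as [_ [_ [U2_comm _]]]. rewrite U2_comm, HU2_U; auto.
  rewrite (U_comm (U t c)); auto. apply U_I01; auto.
Qed.

Lemma U2_cont_lower x y : Icc 0 g x -> Icc 0 g y -> cont2_in U2 (Icc 0 g) (Icc 0 g) x y.
Proof.
  intros Hx Hy. pose proof g_open. destruct g_c_mid as [[_ Hgd] _].
  assert (Hsub : forall z, Icc 0 g z -> I01 z) by (unfold Icc, I01; intros; lra).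
  assert (Hc_lower : forall z, Icc 0 g z -> Icc 0 e (U z c)).
  { intros z Hz. destruct (U_I01 z c); auto. split; [lra|].
    pose proof g_c_inverse as [_ [_ E]]. rewrite <- E. apply U_mono_l; auto. apply Hz. }
  apply (cont2_in_ext (fun p q => U p (U q c))); auto.
  - intros p q Hp Hq. symmetry. apply U2_U_translate; auto.
  - apply cont2_in_comp with (A := I01) (B := Icc 0 e); auto.
    + apply cont_mid_lower; auto. unfold Icc in Hx; lra.
    + apply cont_in_id.
    + apply cont_in_subset with (A := I01); auto.
      apply (translate_cont c g); auto using inverse_pair_sym, g_c_inverse.
Qed.

Lemma U2_cont_upper x y : Icc g 1 x -> Icc g 1 y -> cont2_in U2 (Icc g 1) (Icc g 1) x y.
Proof.
  intros Hx Hy. pose proof g_open. destruct g_c_mid as [[Hag _] _].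
  assert (Hsub : forall z, Icc g 1 z -> I01 z) by (unfold Icc, I01; intros; lra).
  assert (Hc_upper : forall z, Icc g 1 z -> Icc e 1 (U z c)).
  { intros z Hz. destruct (U_I01 z c); auto. split; [|lra].
    pose proof g_c_inverse as [_ [_ E]]. rewrite <- E. apply U_mono_l; auto. apply Hz. }
  apply (cont2_in_ext (fun p q => U p (U q c))); auto.
  - intros p q Hp Hq. symmetry. apply U2_U_translate; auto.
  - apply cont2_in_comp with (A := I01) (B := Icc e 1); auto.
    + apply cont_mid_upper; auto. unfold Icc in Hx; lra.
    + apply cont_in_id.
    + apply cont_in_subset with (A := I01); auto.
      apply (translate_cont c g); auto using inverse_pair_sym, g_c_inverse.
Qed.

Lemma U2_continuous_underlying : continuous_underlying U2 g.
Proof.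
  apply continuous_underlying_of_squares; auto using g_open, U2_cont_lower, U2_cont_upper.
Qed.

Lemma U_linear_representable : exists V f, representable V f /\ linear_transform_on U V a d.
Proof.
  pose proof a_lt_e. pose proof e_lt_d.
  apply (representable_of_generator U gen e a d); auto using gen_e, gen_to_minus_infty, gen_to_plus_infty.
  - lra.
  - intros. apply mid_U; auto.
  - intros. apply U_comm; auto using mid_I01.
  - intros. apply U_assoc; auto using mid_I01.
  - intros. apply U_mono_l; auto using mid_I01.
  - intros. apply U_neutral_l; auto using mid_I01.
  - intros. apply gen_strict; auto.
  - intros. apply gen_cont; auto.
  - intros. apply gen_U; auto.
Qed.

(* [U2] is [U] transported by the translation [x |-> U x c], so [gen + gen c] generates it. *)
Lemma U2_linear_representable : exists V f, representable V f /\ linear_transform_on U2 V a d.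
Proof.
  pose proof a_lt_e. pose proof e_lt_d. destruct g_c_mid as [Hg Hc'].
  assert (U2_mid : forall x y, mid x -> mid y -> mid (U2 x y)).
  { intros. rewrite HU2_U; auto using mid_I01. apply mid_U; auto. apply mid_U; auto. }
  destruct HU2 as [_ [_ [U2_comm [U2_assoc [U2_mono U2_neutral]]]]].
  apply (representable_of_generator U2 (fun z => gen z + gen c) g a d); auto.
  - lra.
  - intros. apply U2_comm; auto using mid_I01.
  - intros. apply U2_assoc; auto using mid_I01.
  - intros. apply U2_mono; auto using mid_I01.
  - intros. apply U2_neutral; auto using mid_I01.
  - intros. apply Rplus_lt_compat_r, gen_strict; auto.
  - intros. apply cont_in_plus_const, gen_cont; auto.
  - rewrite <- gen_U, <- gen_e; auto. pose proof g_c_inverse as [_ [_ E]]. rewrite E. ring.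
  - intros M. destruct (gen_to_minus_infty (M - gen c)) as [del [Hdel Hnear]].
    exists del. split; auto. intros x Hx. specialize (Hnear x Hx). lra.
  - intros M. destruct (gen_to_plus_infty (M - gen c)) as [del [Hdel Hnear]].
    exists del. split; auto. intros x Hx. specialize (Hnear x Hx). lra.
  - intros x y Hx Hy. rewrite HU2_U, !gen_U; auto using mid_I01, mid_U. ring.
Qed.

Lemma U2_outer x y : in_outer a d x -> in_outer a d y -> U x y = U2 x y.
Proof.
  intros Hx Hy. rewrite HU2_U; try (apply outer_I01; auto). f_equal.
  destruct (outer_translate_fixed x Hx) as [Fu Fv].
  destruct Hgc as [[_ Ec]|[_ Ec]]; rewrite Ec; auto.
Qed.

Lemma translate_decomposition : continuous_underlying U2 g /\ band_decomposition U U2.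
Proof.
  split; [exact U2_continuous_underlying|].
  pose proof a_nonneg. pose proof d_le_1. pose proof a_lt_e. pose proof e_lt_d.
  exists a, d. unfold I01, idempotent.
  repeat split; auto using a_idempotent, d_idempotent, U_linear_representable,
    U2_linear_representable, U2_outer; lra.
Qed.

End Translate.

End Invertible_element.
End Uninorm.

Lemma upow_sup_inf_exist U e u v : uninorm U e -> 0 < e < 1 -> inverse_pair U e u v ->
  exists a d, is_glb (fun s => exists n, s = upow U e v n) a /\
              is_lub (fun s => exists n, s = upow U e u n) d.
Proof.
  intros HU He [Iu [Iv _]].
  destruct (completeness (fun s => exists n, s = upow U e u n)) as [d Hd].
  { exists 1. intros s [n ->]. apply (upow_I01 U e HU He); auto. }
  { exists e, O. reflexivity. }
  destruct (glb_exists (fun s => exists n, s = upow U e v n)) as [a Ha].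
  { exists e, O. reflexivity. }
  { exists 0. intros s [n ->]. apply (upow_I01 U e HU He); auto. }
  exists a, d. auto.
Qed.

Lemma decomposition_of_inverse_pair (U U2 : R -> R -> R) (e g c : R) :
  uninorm U e -> 0 < e < 1 -> continuous_underlying U e -> uninorm U2 g ->
  inverse_pair U e g c -> g <> e ->
  (forall s t, I01 s -> I01 t -> U2 s t = U (U s c) t) ->
  continuous_underlying U2 g /\ band_decomposition U U2.
Proof.
  intros HU He Hc HU2 Hgc Hne HU2_U.
  assert (Hband : forall u v, inverse_pair U e u v -> e < u ->
            (g = u /\ c = v) \/ (g = v /\ c = u) ->
            continuous_underlying U2 g /\ band_decomposition U U2).
  { intros u v Huv Heu Hgcuv.
    destruct (upow_sup_inf_exist U e u v HU He Huv) as [a [d [Ha Hd]]].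
    exact (translate_decomposition U e HU He Hc u v Huv Heu a d Hd Ha U2 g c HU2 Hgcuv HU2_U). }
  destruct (Rlt_le_dec e g) as [Lt|Le].
  - apply (Hband g c); auto.
  - apply (Hband c g); auto.
    + apply (inverse_pair_sym U e HU); auto.
    + apply (inverse_gt_e U e HU He g c); auto. lra.
Qed.

Lemma fuzzy_negation_onto N : fuzzy_negation N -> continuous_on01 N ->
  forall p, I01 p -> exists x, I01 x /\ N x = p.
Proof.
  intros [_ [_ [HN0 HN1]]] HcN p Hp.
  destruct (IVT_Icc (fun z => N (1 + -1 * z)) 0 1 p) as [z [Hz E]]; [lra| | |].
  - intros z Hz. apply (cont_in_comp N (fun z => 1 + -1 * z) I01 (Icc 0 1)).
    + unfold cont_in. apply HcN. unfold Icc, I01 in *. lra.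
    + apply cont_in_affine.
    + intros w Hw. unfold Icc, I01 in *. lra.
  - replace (1 + -1 * 0) with 1 by ring. replace (1 + -1 * 1) with 0 by ring.
    rewrite HN0, HN1. unfold I01 in Hp. lra.
  - exists (1 + -1 * z). split; auto. unfold Icc, I01 in *. lra.
Qed.

Section Negation_exchange.
Variables (N1 N2 : R -> R) (U1 U2 : R -> R -> R) (e1 e2 : R).
Hypothesis HU1 : uninorm U1 e1.
Hypothesis He1 : 0 < e1 < 1.
Hypothesis HU2 : uninorm U2 e2.
Hypothesis He2 : 0 < e2 < 1.
Hypothesis N1_I01 : forall x, I01 x -> I01 (N1 x).
Hypothesis N2_I01 : forall x, I01 x -> I01 (N2 x).
Hypothesis N1_onto : forall p, I01 p -> exists x, I01 x /\ N1 x = p.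
Hypothesis N2_onto : forall p, I01 p -> exists x, I01 x /\ N2 x = p.
Hypothesis Hexchange : forall x y, I01 x -> I01 y -> U1 (N1 x) y = U2 (N2 x) y.

Let e1_I01 : I01 e1 := e_I01 e1 He1.
Let e2_I01 : I01 e2 := e_I01 e2 He2.

Lemma N2_from_N1 x : I01 x -> U1 (N1 x) e2 = N2 x.
Proof. intros Hx. rewrite Hexchange; auto. apply (U_neutral_r U2 e2 HU2 He2); auto. Qed.

Lemma N1_from_N2 x : I01 x -> U2 (N2 x) e1 = N1 x.
Proof. intros Hx. rewrite <- Hexchange; auto. apply (U_neutral_r U1 e1 HU1 He1); auto. Qed.

Lemma U1_U2_cancel q : I01 q -> U1 (U2 q e1) e2 = q.
Proof.
  intros Hq. destruct (N2_onto q Hq) as [x [Hx <-]]. rewrite N1_from_N2, N2_from_N1; auto.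
Qed.

Lemma U1_via_U2 p y : I01 p -> I01 y -> U1 p y = U2 (U1 p e2) y.
Proof.
  intros Hp Hy. destruct (N1_onto p Hp) as [x [Hx <-]]. rewrite N2_from_N1; auto.
Qed.

Lemma e2_inverse : inverse_pair U1 e1 e2 (U2 e1 e1).
Proof.
  assert (Ic : I01 (U2 e1 e1)) by (apply (U_I01 U2 e2 HU2); auto).
  split; [exact e2_I01|split; [exact Ic|]].
  rewrite (U_comm U1 e1 HU1); auto. apply U1_U2_cancel; auto.
Qed.

Lemma U2_translate_U1 s t : I01 s -> I01 t -> U2 s t = U1 (U1 s (U2 e1 e1)) t.
Proof.
  intros Hs Ht. pose proof e2_inverse as [_ [Ic _]].
  assert (Isc : I01 (U1 s (U2 e1 e1))) by (apply (U_I01 U1 e1 HU1); auto).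
  rewrite (U1_via_U2 _ t); auto. f_equal.
  rewrite (translate_cancel U1 e1 HU1 He1 (U2 e1 e1) e2); auto.
  apply (inverse_pair_sym U1 e1 HU1), e2_inverse.
Qed.

Lemma e2_neq_e1 x : I01 x -> N1 x <> N2 x -> e2 <> e1.
Proof.
  intros Hx Hne E. apply Hne. rewrite <- N2_from_N1, E; auto.
  symmetry. apply (U_neutral_r U1 e1 HU1 He1); auto.
Qed.

End Negation_exchange.

Theorem mainTheorem7 :
  forall (N1 N2 : R -> R) (U1 U2 : R -> R -> R) (e1 e2 : R),
    fuzzy_negation N1 -> continuous_on01 N1 ->
    fuzzy_negation N2 -> continuous_on01 N2 ->
    0 < e1 < 1 -> uninorm U1 e1 -> disjunctive U1 ->
    0 < e2 < 1 -> uninorm U2 e2 -> disjunctive U2 ->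
    (forall x y, I01 x -> I01 y -> U1 (N1 x) y = U2 (N2 x) y) ->
    continuous_underlying U1 e1 ->
    (exists x, I01 x /\ N1 x <> N2 x) ->
    continuous_underlying U2 e2 /\
    exists a d : R,
      I01 a /\ I01 d /\ idempotent U1 a /\ idempotent U1 d /\ a < d /\
      (exists (V1 : R -> R -> R) (f1 : R), representable V1 f1 /\ linear_transform_on U1 V1 a d) /\
      (exists (V2 : R -> R -> R) (f2 : R), representable V2 f2 /\ linear_transform_on U2 V2 a d) /\
      (forall x y, in_outer a d x -> in_outer a d y -> U1 x y = U2 x y).
Proof.
  intros N1 N2 U1 U2 e1 e2 HN1 HcN1 HN2 HcN2 He1 HU1 _ He2 HU2 _ Hexchange Hc1 [x0 [Hx0 Hne]].
  pose proof (fuzzy_negation_onto N1 HN1 HcN1) as N1_onto.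
  pose proof (fuzzy_negation_onto N2 HN2 HcN2) as N2_onto.
  destruct HN1 as [N1_I01 _]. destruct HN2 as [N2_I01 _].
  apply (decomposition_of_inverse_pair U1 U2 e1 e2 (U2 e1 e1)); auto.
  - eapply (e2_inverse N1 N2); eauto.
  - eapply (e2_neq_e1 N1 N2); eauto.
  - eapply (U2_translate_U1 N1 N2); eauto.
Qed.
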